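(* (Ordered SDC Resolution Completeness.) Let $N$ be a set of MSL(SDC) clauses that is saturated up to redundancy with respect to SDC-Resolution and SDC-Factoring (with the atom ordering $\prec$ and selection function $\mathrm{sel}$ below). Then $N$ is unsatisfiable if and only if $\square\in\mathrm{ground}(N)$. Moreover, if $\square\notin\mathrm{ground}(N)$, then the partial model $I_N$ satisfies $N$.
   Context: Clauses: a clause is written $\Gamma\rightarrow\Delta$ where $\Gamma,\Delta$ are finite multisets of atoms (negative resp. positive literals); $\square$ is the empty clause. Terms: a variable and a constant are straight; $f(s_1,\dots,s_n)$ is straight if $s_1,\dots,s_n$ are pairwise distinct variables except for at most one argument $s_i$ that is straight. Depth of variables/constants is $0$, depth$(f(s_1,\dots,s_n))=1+\max_i$ depth$(s_i)$; shallow = depth at most 1; linear = no variable occurs twice; complex = not a variable. Straight dismatching constraints (SDCs): an atomic SDC is $t\neq s$ with $s,t$ variable-disjoint and $s$ straight; an SDC $\pi=\bigwedge_i t_i\neq s_i$ is a finite conjunction of these. $\pi\sigma=\bigwedge_i t_i\sigma\neq s_i$. A solution of $\pi$ is a grounding substitution $\delta$ such that no $t_i\delta$ is an instance of $s_i$; solvable = has a solution. $\mathrm{norm}(\pi)$ is the normal form under: $\pi\wedge f(\vec t)\neq y\to\bot$; $\pi\wedge f(\vec t)\neq f(y_1,\dots,y_n)\to\bot$ ($y_j$ variables); $\pi\wedge f(t_1,\dots,t_n)\neq f(s_1,\dots,s_n)\to\pi\wedge t_i\neq s_i$ if $s_i$ is complex; $\pi\wedge f(\vec t)\neq g(\vec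 s)\to\pi$ for $f\neq g$; $\pi\wedge x\neq s\wedge x\neq s\sigma\to\pi\wedge x\neq s$. Constrained clauses $(C;\pi)$: ground instances are $C\delta$ with $\delta$ a solution of $\pi$ grounding all variables of $C$ and of the left-hand sides of $\pi$; $\mathrm{ground}(N)$ is the union over $N$. A Herbrand interpretation $I$ is a set of ground atoms; $I\models\Gamma\rightarrow\Delta$ (ground) iff $\Delta\cap I\neq\emptyset$ or $\Gamma\not\subseteq I$; $I\models(C;\pi)$ iff $I$ satisfies all its ground instances; $N$ is satisfiable iff it has a Herbrand model. MSL(SDC) clause: $(C;\pi)$ with $\pi$ an SDC and $C=\Gamma\rightarrow\Delta$ such that (i) all argument terms in $\Delta$ are shallow, each atom of $\Delta$ is linear and distinct atoms of $\Delta$ are variable-disjoint, (ii) all predicates are monadic, (iii) no equations in $\Delta$, (iv) no equations in $\Gamma$, or $\Gamma=\{s\approx t\}$, $\Delta$ empty and $s,t$ non-unifiable. Ordering: $\prec$ is an atom ordering (irreflexive, well-founded, total on ground atoms), extended to literals ($A\mapsto\{A\}$, $\neg A\mapsto\{A,A\}$, multiset extension) and to ground clauses (multiset extension); for ground atoms $Q(s)$, $P(t)$ with $s$ a proper subterm of $t$, $\neg Q(s)$ is not greater than $P(t)$. For a set $M$ of ground clauses, $M^{\prec C}=\{D\in M\mid D\prec C\}$. A literal $A$ is maximal [strictly maximal] in $(C\vee A;\pi)$ if some solution $\delta$ of $\pi$ gives $B\delta\preceq A\delta$ [$B\delta\prec A\delta$] for all literals $B$ of $C$. Selection: for $(S_1(t_1),\dots,S_n(t_n)\rightarrow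 P_1(s_1),\dots,P_m(s_m);\pi)$, $\mathrm{sel}(C)$ consists of those $S_i(t_i)$ with (1) $t_i$ not a variable, or (2) all $t_1,\dots,t_n$ variables and $t_i\notin\mathrm{vars}(s_1,\dots,s_m)$, or (3) $\{t_1,\dots,t_n\}\subseteq\mathrm{vars}(s_1,\dots,s_m)$ and $s_j=t_i$ for some $j$. SDC-Resolution: from variable-disjoint $(\Gamma_1\rightarrow\Delta_1,A;\pi_1)$, $(\Gamma_2,B\rightarrow\Delta_2;\pi_2)$ infer $((\Gamma_1,\Gamma_2\rightarrow\Delta_1,\Delta_2)\sigma;\mathrm{norm}((\pi_1\wedge\pi_2)\sigma))$ if $\sigma=\mathrm{mgu}(A,B)$, $\mathrm{norm}((\pi_1\wedge\pi_2)\sigma)$ is solvable, $A\sigma$ is strictly maximal in $(\Gamma_1\rightarrow\Delta_1,A;\pi_1)\sigma$ and $\mathrm{sel}(\Gamma_1\rightarrow\Delta_1,A)=\emptyset$, and either $B\in\mathrm{sel}(\Gamma_2,B\rightarrow\Delta_2)$ or ($\mathrm{sel}(\Gamma_2,B\rightarrow\Delta_2)=\emptyset$ and $\neg B\sigma$ is maximal in $(\Gamma_2,B\rightarrow\Delta_2;\pi_2)\sigma$). SDC-Factoring: from $(\Gamma\rightarrow\Delta,A,B;\pi)$ infer $((\Gamma\rightarrow\Delta,A)\sigma;\mathrm{norm}(\pi\sigma))$ if $\sigma=\mathrm{mgu}(A,B)$, $\mathrm{sel}(\Gamma\rightarrow\Delta,A,B)=\emptyset$, $A\sigma$ is maximal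 in $(\Gamma\rightarrow\Delta,A,B;\pi)\sigma$, and $\mathrm{norm}(\pi\sigma)$ is solvable. Redundancy and saturation: $(C;\pi)$ is redundant in $N$ if for every $D\in\mathrm{ground}((C;\pi))$ there are $D_1,\dots,D_n\in\mathrm{ground}(N)^{\prec D}$ with $D_1,\dots,D_n\models D$. $N$ is saturated up to redundancy if for every SDC-Resolution or SDC-Factoring inference from clauses of $N$ the conclusion $(R;\pi)$ is redundant in $N$ or $\mathrm{ground}((R;\pi))\subseteq\mathrm{ground}(N)$. Partial model: for $C\in\mathrm{ground}(N)$ let $I_C=\bigcup\{\delta_D\mid D\in\mathrm{ground}(N),D\prec C\}$, where $\delta_D=\{A\}$ if $D=\Gamma\rightarrow\Delta,A$ with $A$ strictly maximal in $D$, $\mathrm{sel}(D)=\emptyset$ and $I_D\not\models D$, and $\delta_D=\emptyset$ otherwise (for a ground instance $D=C'\delta$ of $(C';\pi')\in N$, $\mathrm{sel}(D)$ means $\mathrm{sel}(C')\delta$). $I_N=\bigcup_{C\in\mathrm{ground}(N)}\delta_C$. *)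

From Stdlib Require Import List Relations Permutation.
Import ListNotations.
Set Implicit Arguments.

Inductive term (F : Type) : Type :=
| Var : nat -> term F
| Fn  : F -> list (term F) -> term F.
Arguments Var {F} _.
Arguments Fn {F} _ _.

Fixpoint subst {F} (sg : nat -> term F) (t : term F) : term F :=
  match t with
  | Var x => sg x
  | Fn f ts => Fn f (map (subst sg) ts)
  end.

(* variable occurrences, with multiplicity *)
Fixpoint vars {F} (t : term F) : list nat :=
  match t with
  | Var x => [x]
  | Fn _ ts => (fix vl (l : list (term F)) : list nat :=
                  match l with [] => [] | u :: r => vars u ++ vl r end) ts
  end.

Fixpoint depth {F} (t : term F) : nat :=
  match t with
  | Var _ => 0
  | Fn _ ts => match ts with
               | [] => 0
               | _ => S ((fix dl (l : list (term F)) : nat :=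
                           match l with [] => 0 | u :: r => Nat.max (depth u) (dl r) end) ts)
               end
  end.

Fixpoint wf {F} (arity : F -> nat) (t : term F) : Prop :=
  match t with
  | Var _ => True
  | Fn f ts => length ts = arity f /\
               (fix wl (l : list (term F)) : Prop :=
                  match l with [] => True | u :: r => wf arity u /\ wl r end) ts
  end.

Definition ground {F} (t : term F) : Prop := vars t = [].
Definition shallow {F} (t : term F) : Prop := depth t <= 1.
Definition linear {F} (t : term F) : Prop := NoDup (vars t).
Definition is_var {F} (t : term F) : Prop := exists x, t = Var x.
Definition complex {F} (t : term F) : Prop := ~ is_var t.

(* straight terms (taken to be linear) *)
Inductive straight {F} : term F -> Prop :=
| st_var : forall x, straight (Var x)
| st_vars : forall f ts, linear (Fn f ts) -> Forall is_var ts -> straight (Fn f ts)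
| st_one : forall f l1 s l2, linear (Fn f (l1 ++ s :: l2)) ->
    Forall is_var l1 -> Forall is_var l2 -> straight s ->
    straight (Fn f (l1 ++ s :: l2)).

Inductive psubterm {F} : term F -> term F -> Prop :=
| psub_arg : forall u f ts, In u ts -> psubterm u (Fn f ts)
| psub_deep : forall u v f ts, In v ts -> psubterm u v -> psubterm u (Fn f ts).

Inductive atom (F P : Type) : Type :=
| Pred : P -> term F -> atom F P
| Eqn  : term F -> term F -> atom F P.
Arguments Pred {F P} _ _.
Arguments Eqn {F P} _ _.

Definition atom_args {F P} (A : atom F P) : list (term F) :=
  match A with Pred _ t => [t] | Eqn s t => [s; t] end.
Definition atom_vars {F P} (A : atom F P) : list nat := flat_map vars (atom_args A).
Definition subst_atom {F P} (sg : nat -> term F) (A : atom F P) : atom F P :=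
  match A with Pred p t => Pred p (subst sg t) | Eqn s t => Eqn (subst sg s) (subst sg t) end.
Definition wf_atom {F P} (arity : F -> nat) (A : atom F P) : Prop :=
  Forall (wf arity) (atom_args A).
Definition ground_atom {F P} (arity : F -> nat) (A : atom F P) : Prop :=
  Forall (fun t => ground t /\ wf arity t) (atom_args A).

Inductive lit (F P : Type) : Type :=
| Pos : atom F P -> lit F P
| Neg : atom F P -> lit F P.
Arguments Pos {F P} _.
Arguments Neg {F P} _.

Definition subst_lit {F P} (sg : nat -> term F) (L : lit F P) : lit F P :=
  match L with Pos A => Pos (subst_atom sg A) | Neg A => Neg (subst_atom sg A) end.

(* clause Gamma -> Delta : (Gamma, Delta), lists read as multisets *)
Definition clause (F P : Type) : Type := (list (atom F P) * list (atom F P))%type.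
Definition subst_clause {F P} (sg : nat -> term F) (C : clause F P) : clause F P :=
  (map (subst_atom sg) (fst C), map (subst_atom sg) (snd C)).
Definition clause_vars {F P} (C : clause F P) : list nat :=
  flat_map atom_vars (fst C) ++ flat_map atom_vars (snd C).
Definition lits {F P} (C : clause F P) : list (lit F P) :=
  map Neg (fst C) ++ map Pos (snd C).
Definition clause_perm {F P} (C D : clause F P) : Prop :=
  Permutation (fst C) (fst D) /\ Permutation (snd C) (snd D).
Definition empty_clause {F P} : clause F P := ([], []).

(* mul_lt lt N M  means  N < M                                         *)
Definition mul_lt {A} (lt : A -> A -> Prop) (N M : list A) : Prop :=
  exists Z X Y, Permutation M (Z ++ X) /\ Permutation N (Z ++ Y) /\ X <> [] /\
    forall y, In y Y -> exists x, In x X /\ lt y x.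

Definition lit_ms {F P} (L : lit F P) : list (atom F P) :=
  match L with Pos A => [A] | Neg A => [A; A] end.
Definition lit_lt {F P} (lt : atom F P -> atom F P -> Prop) (L1 L2 : lit F P) : Prop :=
  mul_lt lt (lit_ms L1) (lit_ms L2).
Definition lit_le {F P} (lt : atom F P -> atom F P -> Prop) (L1 L2 : lit F P) : Prop :=
  L1 = L2 \/ lit_lt lt L1 L2.
Definition clause_lt {F P} (lt : atom F P -> atom F P -> Prop) (C D : clause F P) : Prop :=
  mul_lt (lit_lt lt) (lits C) (lits D).

Definition atom_ordering {F P} (arity : F -> nat) (lt : atom F P -> atom F P -> Prop) : Prop :=
  (forall A, ~ lt A A) /\
  (forall A B C, lt A B -> lt B C -> lt A C) /\
  well_founded lt /\
  (forall A B, ground_atom arity A -> ground_atom arity B -> A <> B -> lt A B \/ lt B A) /\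
  (forall (Q Pp : P) (s t : term F), ground s -> wf arity s -> ground t -> wf arity t ->
      psubterm s t -> ~ lit_lt lt (Pos (Pred Pp t)) (Neg (Pred Q s))).

(* a constraint is a list of pairs (t, s) meaning  /\ t <> s           *)
Definition sdc (F : Type) : Type := list (term F * term F).

Definition subst_sdc {F} (sg : nat -> term F) (pi : sdc F) : sdc F :=
  map (fun c => (subst sg (fst c), snd c)) pi.
Definition sdc_lhs_vars {F} (pi : sdc F) : list nat := flat_map (fun c => vars (fst c)) pi.

Definition is_SDC {F} (arity : F -> nat) (pi : sdc F) : Prop :=
  Forall (fun c => straight (snd c) /\ wf arity (fst c) /\ wf arity (snd c) /\
                   (forall x, In x (vars (fst c)) -> ~ In x (vars (snd c)))) pi.

Definition grounding {F} (arity : F -> nat) (dl : nat -> term F) : Prop :=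
  forall x, ground (dl x) /\ wf arity (dl x).

Definition instance_of {F} (u s : term F) : Prop := exists tau, u = subst tau s.

Definition solution {F} (arity : F -> nat) (dl : nat -> term F) (pi : sdc F) : Prop :=
  grounding arity dl /\ Forall (fun c => ~ instance_of (subst dl (fst c)) (snd c)) pi.

Definition solvable {F} (arity : F -> nat) (pi : sdc F) : Prop :=
  exists dl, solution arity dl pi.

(* normalization: None stands for bottom *)
Inductive norm_step {F} : option (sdc F) -> option (sdc F) -> Prop :=
| ns_var : forall l r f ts y, Permutation l ((Fn f ts, Var y) :: r) ->
    norm_step (Some l) None
| ns_flat : forall l r f ts ys, Permutation l ((Fn f ts, Fn f ys) :: r) ->
    Forall is_var ys -> norm_step (Some l) None
| ns_dec : forall l r f ts ss i d, Permutation l ((Fn f ts, Fn f ss) :: r) ->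
    i < length ts -> i < length ss -> complex (nth i ss d) ->
    norm_step (Some l) (Some ((nth i ts d, nth i ss d) :: r))
| ns_clash : forall l r f g ts ss, Permutation l ((Fn f ts, Fn g ss) :: r) -> f <> g ->
    norm_step (Some l) (Some r)
| ns_sub : forall l r x s sg, Permutation l ((Var x, s) :: (Var x, subst sg s) :: r) ->
    norm_step (Some l) (Some ((Var x, s) :: r)).

Definition is_norm {F} (pi pi' : option (sdc F)) : Prop :=
  clos_refl_trans _ norm_step pi pi' /\ ~ exists pi'', norm_step pi' pi''.

Definition cclause (F P : Type) : Type := (clause F P * sdc F)%type.

Definition ground_instance {F P} (arity : F -> nat) (Cp : cclause F P) (D : clause F P) : Prop :=
  exists dl, solution arity dl (snd Cp) /\ D = subst_clause dl (fst Cp).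

Definition in_groundN {F P} (arity : F -> nat) (N : cclause F P -> Prop) (D : clause F P) : Prop :=
  exists Cp D', N Cp /\ ground_instance arity Cp D' /\ clause_perm D' D.

Definition gsat {F P} (I : atom F P -> Prop) (D : clause F P) : Prop :=
  (exists A, In A (snd D) /\ I A) \/ (exists A, In A (fst D) /\ ~ I A).

Definition cmodels {F P} (arity : F -> nat) (I : atom F P -> Prop) (Cp : cclause F P) : Prop :=
  forall D, ground_instance arity Cp D -> gsat I D.

Definition satisfiable {F P} (arity : F -> nat) (N : cclause F P -> Prop) : Prop :=
  exists I : atom F P -> Prop, forall Cp, N Cp -> cmodels arity I Cp.

Definition is_Pred {F P} (A : atom F P) : Prop := exists p t, A = Pred p t.

Definition unifiable {F} (s t : term F) : Prop := exists sg, subst sg s = subst sg t.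

Definition msl_clause {F P} (arity : F -> nat) (Cp : cclause F P) : Prop :=
  let '((G, D), pi) := Cp in
  is_SDC arity pi /\
  Forall (wf_atom arity) G /\ Forall (wf_atom arity) D /\
  (forall A, In A D -> Forall shallow (atom_args A) /\ NoDup (atom_vars A)) /\
  (forall A B, In A D -> In B D -> A <> B ->
      forall x, In x (atom_vars A) -> ~ In x (atom_vars B)) /\
  (* (ii) monadic: built into the atom type; (iii) *)
  Forall is_Pred D /\
  (Forall is_Pred G \/ exists s t, G = [Eqn s t] /\ D = [] /\ ~ unifiable s t).

Definition atom_arg_is_var {F P} (A : atom F P) : Prop := exists p x, A = Pred p (Var x).

Definition sel_cond {F P} (C : clause F P) (B : atom F P) : Prop :=
  let '(G, D) := C in
  let dvars := flat_map atom_vars D in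
  exists S t, B = Pred S t /\
  ( complex t
  \/ ((forall A, In A G -> atom_arg_is_var A) /\
                exists x, t = Var x /\ ~ In x dvars)
  \/ ((forall A, In A G -> exists p y, A = Pred p (Var y) /\ In y dvars) /\
                exists A, In A D /\ In t (atom_args A))).

Definition selected {F P} (C : clause F P) (B : atom F P) : Prop :=
  In B (fst C) /\ sel_cond C B.
Definition sel_empty {F P} (C : clause F P) : Prop := forall B, ~ selected C B.

Definition is_mgu {F P} (sg : nat -> term F) (A B : atom F P) : Prop :=
  subst_atom sg A = subst_atom sg B /\
  forall th, subst_atom th A = subst_atom th B ->
    exists tau, forall x, th x = subst tau (sg x).

Definition cclause_vars {F P} (Cp : cclause F P) : list nat :=
  clause_vars (fst Cp) ++ sdc_lhs_vars (snd Cp).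

Definition var_disjoint {F P} (C1 C2 : cclause F P) : Prop :=
  forall x, In x (cclause_vars C1) -> ~ In x (cclause_vars C2).

Definition rename {F P} (r : nat -> nat) (Cp : cclause F P) : cclause F P :=
  (subst_clause (fun x => Var (r x)) (fst Cp), subst_sdc (fun x => Var (r x)) (snd Cp)).
Definition is_variant {F P} (Cp Cp' : cclause F P) : Prop :=
  exists r : nat -> nat, (forall x y, r x = r y -> x = y) /\ Cp' = rename r Cp.

Definition strictly_max {F P} (arity : F -> nat) (lt : atom F P -> atom F P -> Prop)
  (L : lit F P) (rest : list (lit F P)) (pi : sdc F) : Prop :=
  exists dl, solution arity dl pi /\
    forall B, In B rest -> lit_lt lt (subst_lit dl B) (subst_lit dl L).
Definition maximal {F P} (arity : F -> nat) (lt : atom F P -> atom F P -> Prop)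
  (L : lit F P) (rest : list (lit F P)) (pi : sdc F) : Prop :=
  exists dl, solution arity dl pi /\
    forall B, In B rest -> lit_le lt (subst_lit dl B) (subst_lit dl L).

Definition sdc_resolution {F P} (arity : F -> nat) (lt : atom F P -> atom F P -> Prop)
  (C1 C2 R : cclause F P) : Prop :=
  exists G1 D1a A D1b pi1 G2a B G2b D2 pi2 sg pi',
    C1 = ((G1, D1a ++ A :: D1b), pi1) /\
    C2 = ((G2a ++ B :: G2b, D2), pi2) /\
    var_disjoint C1 C2 /\
    is_mgu sg A B /\
    is_norm (Some (subst_sdc sg (pi1 ++ pi2))) (Some pi') /\
    solvable arity pi' /\
    strictly_max arity lt (Pos (subst_atom sg A))
      (map (subst_lit sg) (lits (G1, D1a ++ D1b))) (subst_sdc sg pi1) /\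
    sel_empty (G1, D1a ++ A :: D1b) /\
    (selected (G2a ++ B :: G2b, D2) B \/
     (sel_empty (G2a ++ B :: G2b, D2) /\
      maximal arity lt (Neg (subst_atom sg B))
        (map (subst_lit sg) (lits (G2a ++ G2b, D2))) (subst_sdc sg pi2))) /\
    R = (subst_clause sg (G1 ++ G2a ++ G2b, D1a ++ D1b ++ D2), pi').

Definition sdc_factoring {F P} (arity : F -> nat) (lt : atom F P -> atom F P -> Prop)
  (C R : cclause F P) : Prop :=
  exists G Da A Db B Dc pi sg pi',
    C = ((G, Da ++ A :: Db ++ B :: Dc), pi) /\
    is_mgu sg A B /\
    sel_empty (G, Da ++ A :: Db ++ B :: Dc) /\
    maximal arity lt (Pos (subst_atom sg A))
      (map (subst_lit sg) (lits (G, Da ++ Db ++ B :: Dc))) (subst_sdc sg pi) /\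
    is_norm (Some (subst_sdc sg pi)) (Some pi') /\
    solvable arity pi' /\
    R = (subst_clause sg (G, Da ++ A :: Db ++ Dc), pi').

Definition gentails {F P} (Ds : list (clause F P)) (D : clause F P) : Prop :=
  forall I : atom F P -> Prop, (forall Di, In Di Ds -> gsat I Di) -> gsat I D.

Definition redundant {F P} (arity : F -> nat) (lt : atom F P -> atom F P -> Prop)
  (N : cclause F P -> Prop) (Cp : cclause F P) : Prop :=
  forall D, ground_instance arity Cp D ->
    exists Ds, (forall Di, In Di Ds -> in_groundN arity N Di /\ clause_lt lt Di D) /\
               gentails Ds D.

Definition ground_included {F P} (arity : F -> nat) (N : cclause F P -> Prop)
  (Cp : cclause F P) : Prop :=
  forall D, ground_instance arity Cp D -> in_groundN arity N D.

Definition saturated {F P} (arity : F -> nat) (lt : atom F P -> atom F P -> Prop)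
  (N : cclause F P -> Prop) : Prop :=
  (forall C1 C2 C1' C2' R, N C1 -> N C2 -> is_variant C1 C1' -> is_variant C2 C2' ->
     sdc_resolution arity lt C1' C2' R ->
     redundant arity lt N R \/ ground_included arity N R) /\
  (forall C R, N C -> sdc_factoring arity lt C R ->
     redundant arity lt N R \/ ground_included arity N R).

(* the ground instance of (Cp in N) under dl produces A, given the
   candidate-interpretation function Iof : ground clause -> interpretation *)
Definition produces {F P} (arity : F -> nat) (lt : atom F P -> atom F P -> Prop)
  (Iof : clause F P -> atom F P -> Prop) (Cp : cclause F P) (dl : nat -> term F)
  (A : atom F P) : Prop :=
  let D := subst_clause dl (fst Cp) in
  (exists G Da Db, D = (G, Da ++ A :: Db) /\
     forall L, In L (lits (G, Da ++ Db)) -> lit_lt lt L (Pos A)) /\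
  sel_empty (fst Cp) /\
  ~ gsat (Iof D) D.

Definition ginst {F P} (arity : F -> nat) (N : cclause F P -> Prop)
  (Cp : cclause F P) (dl : nat -> term F) : Prop :=
  N Cp /\ solution arity dl (snd Cp).

(* Iof satisfies the defining equations of I_C for all C in ground(N) *)
Definition is_partial_model_fun {F P} (arity : F -> nat) (lt : atom F P -> atom F P -> Prop)
  (N : cclause F P -> Prop) (Iof : clause F P -> atom F P -> Prop) : Prop :=
  forall C0 d0, ginst arity N C0 d0 ->
    forall A, Iof (subst_clause d0 (fst C0)) A <->
      exists Cp dl, ginst arity N Cp dl /\
        clause_lt lt (subst_clause dl (fst Cp)) (subst_clause d0 (fst C0)) /\
        produces arity lt Iof Cp dl A.

Definition I_N {F P} (arity : F -> nat) (lt : atom F P -> atom F P -> Prop)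
  (N : cclause F P -> Prop) (Iof : clause F P -> atom F P -> Prop) (A : atom F P) : Prop :=
  exists Cp dl, ginst arity N Cp dl /\ produces arity lt Iof Cp dl A.

(* If I_N falsified a ground instance of N, take a minimal one C.  When C has a
   selected or maximal negative literal B, the atom B was produced by a smaller
   instance C' in which it is strictly maximal; the ground resolvent of C' and C
   lifts to an SDC-Resolution inference between variants of the two clauses
   (rename apart, take an mgu of the clashing atoms, and normalise the
   constraint, which keeps every ground solution).  Its instance is false and
   smaller than C, so by saturation it is redundant or already in ground(N),
   contradicting minimality.  A maximal positive literal that is not strictly
   maximal is removed in the same way by SDC-Factoring, and a strictly maximal
   one would have been produced by C itself, making C true. *)

From Stdlib Require Import List Relations Permutation Classical Arith Lia Wellfounded
  FunctionalExtensionality PropExtensionality.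
Import ListNotations.
Set Implicit Arguments.

Ltac solve_incl :=
  let a := fresh "a" in let Ha := fresh "Ha" in
  intros a Ha;
  repeat (first [ rewrite in_app_iff in Ha | rewrite in_app_iff
                | rewrite map_app in Ha | rewrite map_app
                | progress (cbn [In map] in Ha) | progress (cbn [In map]) ]);
  tauto.

Section Terms.
Variable F : Type.

Fixpoint term_nested_ind (Pr : term F -> Prop) (HV : forall x, Pr (Var x))
  (HF : forall f ts, Forall Pr ts -> Pr (Fn f ts)) (t : term F) : Pr t :=
  match t with
  | Var x => HV x
  | Fn f ts => HF f ts ((fix go (l : list (term F)) : Forall Pr l :=
      match l with
      | [] => Forall_nil _
      | u :: r => Forall_cons u (@term_nested_ind Pr HV HF u) (go r)
      end) ts)
  end.

Lemma vars_Fn f (ts : list (term F)) : vars (Fn f ts) = flat_map vars ts.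
Proof. simpl. induction ts; simpl; [reflexivity | f_equal; exact IHts]. Qed.

Lemma wf_Fn ar f (ts : list (term F)) :
  wf ar (Fn f ts) <-> length ts = ar f /\ Forall (wf ar) ts.
Proof.
  simpl. split; intros [H1 H2]; split; auto; clear H1; induction ts; simpl in *; auto.
  - destruct H2; constructor; auto.
  - inversion H2; subst. split; auto. apply IHts; auto.
Qed.

Lemma subst_Fn (sg : nat -> term F) f ts : subst sg (Fn f ts) = Fn f (map (subst sg) ts).
Proof. reflexivity. Qed.

Lemma subst_comp (s1 s2 : nat -> term F) t :
  subst s2 (subst s1 t) = subst (fun x => subst s2 (s1 x)) t.
Proof.
  induction t using term_nested_ind; simpl; auto.
  f_equal. rewrite map_map. induction H; simpl; auto. f_equal; auto.
Qed.

Lemma subst_ext (s1 s2 : nat -> term F) t :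
  (forall x, In x (vars t) -> s1 x = s2 x) -> subst s1 t = subst s2 t.
Proof.
  induction t using term_nested_ind; intros E; simpl.
  - apply E; simpl; auto.
  - rewrite vars_Fn in E. f_equal. induction H; simpl; auto.
    simpl in E. f_equal.
    + apply H; intros; apply E; apply in_or_app; auto.
    + apply IHForall; intros; apply E; apply in_or_app; auto.
Qed.

Lemma subst_ext_all (s1 s2 : nat -> term F) t :
  (forall x, s1 x = s2 x) -> subst s1 t = subst s2 t.
Proof. intros H; apply subst_ext; auto. Qed.

Lemma subst_rename th (r : nat -> nat) d (t : term F) :
  (forall x, th (r x) = d x) -> subst th (subst (fun x => Var (r x)) t) = subst d t.
Proof. intros H. rewrite subst_comp. apply subst_ext_all. exact H. Qed.

Lemma subst_id (t : term F) : subst (@Var F) t = t.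
Proof.
  induction t using term_nested_ind; simpl; auto. f_equal.
  induction H; simpl; auto. f_equal; auto.
Qed.

Lemma vars_subst (s : nat -> term F) t y :
  In y (vars (subst s t)) <-> exists x, In x (vars t) /\ In y (vars (s x)).
Proof.
  induction t using term_nested_ind.
  - simpl. split; [intros; exists x; auto | intros [z [[<-|[]] H]]; auto].
  - rewrite subst_Fn, !vars_Fn. induction H; simpl.
    + split; [intros [] | intros [z [[] _]]].
    + rewrite !in_app_iff, IHForall, H. split.
      * intros [[z [H1 H2]]|[z [H1 H2]]]; exists z; rewrite in_app_iff; tauto.
      * intros [z [H1 H2]]; apply in_app_iff in H1 as [H1|H1]; [left|right]; exists z; tauto.
Qed.

Lemma vars_rename (r : nat -> nat) (t : term F) :
  vars (subst (fun x => Var (r x)) t) = map r (vars t).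
Proof.
  induction t using term_nested_ind; [reflexivity|].
  rewrite subst_Fn, !vars_Fn. induction H; simpl; auto.
  rewrite map_app, H, IHForall; auto.
Qed.

Lemma wf_subst ar (s : nat -> term F) t :
  wf ar t -> (forall x, wf ar (s x)) -> wf ar (subst s t).
Proof.
  induction t using term_nested_ind; intros Hw Hs; simpl; auto.
  apply wf_Fn in Hw as [Hl Hw]. apply wf_Fn. rewrite length_map. split; auto.
  clear Hl. induction H; simpl; constructor; inversion Hw; auto.
Qed.

Lemma ground_subst ar (dl : nat -> term F) t :
  grounding ar dl -> ground (subst dl t) /\ (wf ar t -> wf ar (subst dl t)).
Proof.
  intros G. split.
  - unfold ground. destruct (vars (subst dl t)) as [|y ys] eqn:E; auto. exfalso.
    assert (Hy : In y (vars (subst dl t))) by (rewrite E; simpl; auto).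
    apply vars_subst in Hy as [x [_ Hx]]. destruct (G x) as [Hg _].
    unfold ground in Hg. rewrite Hg in Hx. destruct Hx.
  - intros W. apply wf_subst; auto. intros x; apply G.
Qed.

Lemma subst_rename_inj (r : nat -> nat) (t1 t2 : term F) :
  (forall x y, r x = r y -> x = y) ->
  subst (fun x => Var (r x)) t1 = subst (fun x => Var (r x)) t2 -> t1 = t2.
Proof.
  intros Hr. revert t2.
  induction t1 using term_nested_ind; intros t2 E; destruct t2; simpl in E; try discriminate.
  - inversion E. f_equal; auto.
  - inversion E as [[Hf Hl]]; subst. f_equal. clear E. revert l Hl.
    induction H; intros l2 E; destruct l2; simpl in E; try discriminate; auto.
    inversion E. f_equal; auto.
Qed.

Fixpoint size (t : term F) : nat :=
  match t with
  | Var _ => 1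
  | Fn _ ts => S ((fix sl (l : list (term F)) : nat :=
                    match l with [] => 0 | u :: r => size u + sl r end) ts)
  end.

Definition sizes (l : list (term F)) : nat := fold_right (fun u n => size u + n) 0 l.

Lemma size_Fn f ts : size (Fn f ts) = S (sizes ts).
Proof. reflexivity. Qed.

Lemma size_pos t : 1 <= size t.
Proof. destruct t; simpl; lia. Qed.

Lemma sizes_In u ts : In u ts -> size u <= sizes ts.
Proof.
  induction ts; simpl; [intros [] | intros [->|H]; [lia | specialize (IHts H); lia]].
Qed.

Lemma size_subst_var (s : nat -> term F) t x :
  In x (vars t) -> size (s x) <= size (subst s t).
Proof.
  induction t using term_nested_ind.
  - simpl. intros [->|[]]; auto.
  - rewrite vars_Fn. intros Hx. apply in_flat_map in Hx as [u [Hu Hx]].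
    rewrite Forall_forall in H. specialize (H u Hu Hx).
    rewrite subst_Fn, size_Fn.
    assert (size (subst s u) <= sizes (map (subst s) ts)) by (apply sizes_In, in_map; auto).
    lia.
Qed.

Lemma occurs_check (s : nat -> term F) x f ts :
  In x (vars (Fn f ts)) -> s x <> subst s (Fn f ts).
Proof.
  intros Hx E. rewrite vars_Fn in Hx. apply in_flat_map in Hx as [u [Hu Hx]].
  pose proof (size_subst_var s u x Hx).
  assert (size (subst s u) <= sizes (map (subst s) ts)) by (apply sizes_In, in_map; auto).
  assert (size (s x) = size (subst s (Fn f ts))) by (rewrite E; auto).
  rewrite subst_Fn, size_Fn in H1. lia.
Qed.

End Terms.

Section Unification.
Variable F : Type.
Notation eqs := (list (term F * term F)).

Definition unifies (s : nat -> term F) (E : eqs) : Prop :=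
  Forall (fun e => subst s (fst e) = subst s (snd e)) E.

(* Idempotent form: every unifier [th] factors through [s] as [s] followed by [th]
   itself, so a ground unifier can be read off through the mgu. *)
Definition mgu_eqs (s : nat -> term F) (E : eqs) : Prop :=
  unifies s E /\ forall th, unifies th E -> forall x, th x = subst th (s x).

Definition eqs_vars (E : eqs) : list nat := flat_map (fun e => vars (fst e) ++ vars (snd e)) E.
Definition eqs_nvars (E : eqs) : nat := length (nodup Nat.eq_dec (eqs_vars E)).
Definition eqs_size (E : eqs) : nat :=
  fold_right (fun e n => size (fst e) + size (snd e) + n) 0 E.

Lemma eqs_lex_ind (Pr : eqs -> Prop) :
  (forall E, (forall E', eqs_nvars E' < eqs_nvars E \/
                (eqs_nvars E' <= eqs_nvars E /\ eqs_size E' < eqs_size E) -> Pr E') -> Pr E) ->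
  forall E, Pr E.
Proof.
  intros H E. remember (eqs_nvars E) as n eqn:Hn. revert E Hn.
  induction n as [n IHn] using lt_wf_ind. intros E Hn.
  remember (eqs_size E) as m eqn:Hm. revert E Hn Hm.
  induction m as [m IHm] using lt_wf_ind. intros E Hn Hm. apply H.
  intros E' [Hlt | [Hle Hlt]].
  - apply (IHn (eqs_nvars E')); [lia | reflexivity].
  - destruct (Nat.eq_dec (eqs_nvars E') n).
    + apply (IHm (eqs_size E')); [lia | auto | reflexivity].
    + apply (IHn (eqs_nvars E')); [lia | reflexivity].
Qed.

Lemma nodup_length_incl (l1 l2 : list nat) :
  incl l1 l2 -> length (nodup Nat.eq_dec l1) <= length (nodup Nat.eq_dec l2).
Proof.
  intros H. apply NoDup_incl_length; [apply NoDup_nodup|].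
  intros a Ha. apply nodup_In in Ha. apply nodup_In. auto.
Qed.

Lemma nodup_length_incl_lt (l1 l2 : list nat) x : incl l1 l2 -> In x l2 -> ~ In x l1 ->
  length (nodup Nat.eq_dec l1) < length (nodup Nat.eq_dec l2).
Proof.
  intros H Hx Hn. change (length (x :: nodup Nat.eq_dec l1) <= length (nodup Nat.eq_dec l2)).
  apply NoDup_incl_length.
  - constructor; [rewrite nodup_In; auto | apply NoDup_nodup].
  - intros a [<-|Ha]; apply nodup_In; auto. apply nodup_In in Ha; auto.
Qed.

Lemma eqs_vars_cons e E : eqs_vars (e :: E) = vars (fst e) ++ vars (snd e) ++ eqs_vars E.
Proof. unfold eqs_vars; simpl. rewrite app_assoc. auto. Qed.

Lemma eqs_size_app E1 E2 : eqs_size (E1 ++ E2) = eqs_size E1 + eqs_size E2.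
Proof. induction E1; simpl; auto. rewrite IHE1; lia. Qed.

Lemma unifies_cons s e E :
  unifies s (e :: E) <-> subst s (fst e) = subst s (snd e) /\ unifies s E.
Proof. unfold unifies. split; intros H; [inversion H; auto | destruct H; constructor; auto]. Qed.

Lemma unifies_app s E1 E2 : unifies s (E1 ++ E2) <-> unifies s E1 /\ unifies s E2.
Proof. unfold unifies. apply Forall_app. Qed.

Lemma unifies_ext s1 s2 E : (forall x, s1 x = s2 x) -> unifies s1 E -> unifies s2 E.
Proof.
  intros H. unfold unifies. apply Forall_impl. intros e. rewrite !(subst_ext_all s1 s2); auto.
Qed.

Definition subst_eqs (s : nat -> term F) (E : eqs) : eqs :=
  map (fun e => (subst s (fst e), subst s (snd e))) E.

Lemma unifies_subst_eqs th s E :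
  unifies th (subst_eqs s E) <-> unifies (fun y => subst th (s y)) E.
Proof.
  unfold unifies, subst_eqs. rewrite Forall_map.
  split; apply Forall_impl; intros [a b]; simpl; rewrite !subst_comp; auto.
Qed.

Definition bind_var (x : nat) (v : term F) : nat -> term F :=
  fun y => if Nat.eq_dec y x then v else Var y.

Lemma bind_var_absorbed th x v : th x = subst th v -> forall y, subst th (bind_var x v y) = th y.
Proof. intros H y. unfold bind_var. destruct (Nat.eq_dec y x); subst; simpl; auto. Qed.

Lemma unifies_bind_var th x v E :
  unifies th ((Var x, v) :: E) -> unifies th (subst_eqs (bind_var x v) E).
Proof.
  intros Hu. apply unifies_cons in Hu as [Hx HE]. apply unifies_subst_eqs.
  apply unifies_ext with th; auto. intros z; symmetry; apply bind_var_absorbed; auto.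
Qed.

Lemma eqs_vars_bind_var x v E y :
  ~ In x (vars v) -> In y (eqs_vars (subst_eqs (bind_var x v) E)) ->
  y <> x /\ In y (eqs_vars ((Var x, v) :: E)).
Proof.
  intros Hx Hy. unfold eqs_vars, subst_eqs in Hy.
  rewrite flat_map_concat_map, map_map, <- flat_map_concat_map in Hy.
  apply in_flat_map in Hy as [[a b] [Hab Hy]]. simpl in Hy.
  assert (K : forall w, In y (vars (subst (bind_var x v) w)) ->
                y <> x /\ (In y (vars w) \/ In y (vars v))).
  { intros w Hw. apply vars_subst in Hw as [z [Hz Hyz]]. unfold bind_var in Hyz.
    destruct (Nat.eq_dec z x).
    - split; [intros ->; auto | auto].
    - simpl in Hyz. destruct Hyz as [<-|[]]. auto. }
  assert (InE : forall w, (w = a \/ w = b) -> In y (vars w) -> In y (eqs_vars E)).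
  { intros w Hw Hyw. unfold eqs_vars. apply in_flat_map. exists (a, b). split; auto. simpl.
    apply in_app_iff. destruct Hw; subst; auto. }
  rewrite eqs_vars_cons. simpl (fst _). simpl (snd _).
  apply in_app_iff in Hy as [Hy|Hy]; apply K in Hy as [Hne [Hy|Hy]]; split; auto;
    rewrite !in_app_iff; right; [right|left|right|left]; eauto.
Qed.

Lemma eqs_nvars_bind_var x v E :
  ~ In x (vars v) -> eqs_nvars (subst_eqs (bind_var x v) E) < eqs_nvars ((Var x, v) :: E).
Proof.
  intros Hx. apply nodup_length_incl_lt with x.
  - intros y Hy. apply eqs_vars_bind_var in Hy; tauto.
  - rewrite eqs_vars_cons; simpl; auto.
  - intros Hy. apply eqs_vars_bind_var in Hy; tauto.
Qed.

Lemma mgu_eqs_bind_var x v E s :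
  ~ In x (vars v) -> mgu_eqs s (subst_eqs (bind_var x v) E) ->
  mgu_eqs (fun y => subst s (bind_var x v y)) ((Var x, v) :: E).
Proof.
  intros Hx [U M]. split.
  - apply unifies_cons. split.
    + simpl. unfold bind_var at 1. destruct (Nat.eq_dec x x) as [_|]; [|congruence].
      rewrite <- subst_comp. f_equal. rewrite <- (subst_id v) at 1.
      apply subst_ext. intros y Hy. unfold bind_var. destruct (Nat.eq_dec y x); subst; tauto.
    + apply unifies_subst_eqs in U; auto.
  - intros th Hth y.
    assert (Hu : unifies th (subst_eqs (bind_var x v) E)) by (apply unifies_bind_var; auto).
    apply unifies_cons in Hth as [H1 _].
    rewrite subst_comp, (subst_ext_all (fun z => subst th (s z)) th).
    + symmetry; apply bind_var_absorbed; auto.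
    + intros z; symmetry; apply M; auto.
Qed.

Lemma mgu_eqs_trivial s t E : mgu_eqs s E -> mgu_eqs s ((t, t) :: E).
Proof.
  intros [U M]. split; [apply unifies_cons; auto|].
  intros th Hth. apply M. apply unifies_cons in Hth; tauto.
Qed.

Lemma unifies_orient s a b E : unifies s ((a, b) :: E) -> unifies s ((b, a) :: E).
Proof. rewrite !unifies_cons. simpl. intros [H1 H2]; auto. Qed.

Lemma mgu_eqs_orient s a b E : mgu_eqs s ((a, b) :: E) -> mgu_eqs s ((b, a) :: E).
Proof.
  intros [U M]. split; [apply unifies_orient; auto|].
  intros th Hth. apply M, unifies_orient; auto.
Qed.

Lemma eqs_size_combine (us vs : list (term F)) :
  length us = length vs -> eqs_size (combine us vs) = sizes us + sizes vs.
Proof.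
  revert vs; induction us; intros [|v vs] Hl; simpl in *; try discriminate; auto.
  unfold sizes in *; simpl. rewrite IHus; [lia | congruence].
Qed.

Lemma eqs_vars_combine (us vs : list (term F)) :
  incl (eqs_vars (combine us vs)) (flat_map vars us ++ flat_map vars vs).
Proof.
  revert vs; induction us; intros [|v vs]; simpl; try apply incl_nil_l.
  intros y Hy. specialize (IHus vs). rewrite !in_app_iff in *.
  destruct Hy as [[Hy|Hy]|Hy]; auto. apply IHus in Hy. rewrite in_app_iff in Hy. tauto.
Qed.

Lemma unifies_combine s (us vs : list (term F)) : length us = length vs ->
  unifies s (combine us vs) <-> map (subst s) us = map (subst s) vs.
Proof.
  revert vs; induction us; intros [|v vs] Hl; simpl in Hl; try discriminate.
  - split; auto; constructor.
  - simpl. rewrite unifies_cons, IHus by congruence. simpl. split.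
    + intros [-> ->]; auto.
    + intros E; injection E; auto.
Qed.

Lemma unifies_decompose th f g us vs E :
  unifies th ((Fn f us, Fn g vs) :: E) ->
  f = g /\ length us = length vs /\ unifies th (combine us vs ++ E).
Proof.
  intros Hth. apply unifies_cons in Hth as [H1 H2]. simpl in H1. injection H1 as Hfg Hmap.
  assert (Hl : length us = length vs).
  { rewrite <- (length_map (subst th) us), Hmap, length_map; auto. }
  split; [auto | split; [auto|]]. apply unifies_app. split; auto. apply unifies_combine; auto.
Qed.

Lemma mgu_eqs_decompose s f us vs E : length us = length vs ->
  mgu_eqs s (combine us vs ++ E) -> mgu_eqs s ((Fn f us, Fn f vs) :: E).
Proof.
  intros Hl [U M]. apply unifies_app in U as [U1 U2]. split.
  - apply unifies_cons. split; auto. simpl. f_equal. apply unifies_combine; auto.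
  - intros th Hth. apply M. apply unifies_decompose in Hth; tauto.
Qed.

Lemma unifies_occurs_check th x w E :
  w <> Var x -> unifies th ((Var x, w) :: E) -> ~ In x (vars w).
Proof.
  intros Hw Hu Hin. apply unifies_cons in Hu as [Hu _]. simpl in Hu. destruct w as [y|g ws].
  - simpl in Hin. destruct Hin as [->|[]]; auto.
  - eapply occurs_check; eauto.
Qed.

Lemma eqs_vars_decompose f g (us vs : list (term F)) E :
  incl (eqs_vars (combine us vs ++ E)) (eqs_vars ((Fn f us, Fn g vs) :: E)).
Proof.
  unfold eqs_vars at 1. rewrite flat_map_app. fold (eqs_vars (combine us vs)) (eqs_vars E).
  rewrite eqs_vars_cons. cbn [fst snd]. rewrite !vars_Fn. intros a Ha.
  pose proof (@eqs_vars_combine us vs a). rewrite !in_app_iff in *. tauto.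
Qed.

Lemma eqs_size_decompose f g (us vs : list (term F)) E : length us = length vs ->
  eqs_size (combine us vs ++ E) < eqs_size ((Fn f us, Fn g vs) :: E).
Proof.
  intros Hl. rewrite eqs_size_app, eqs_size_combine by auto.
  change (eqs_size ((Fn f us, Fn g vs) :: E)) with (size (Fn f us) + size (Fn g vs) + eqs_size E).
  rewrite !size_Fn. lia.
Qed.

Theorem unifiable_has_mgu (E : eqs) th : unifies th E -> exists s, mgu_eqs s E.
Proof.
  revert th. induction E as [E IH] using eqs_lex_ind. intros th Hth.
  assert (Hvars : forall E', incl (eqs_vars E') (eqs_vars E) -> eqs_nvars E' <= eqs_nvars E)
    by (intros; apply nodup_length_incl; auto).
  assert (Hbind : forall x w E2, incl (eqs_vars ((Var x, w) :: E2)) (eqs_vars E) ->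
            w <> Var x -> unifies th ((Var x, w) :: E2) -> exists s, mgu_eqs s ((Var x, w) :: E2)).
  { intros x w E2 Hincl Hw Hu. pose proof (unifies_occurs_check Hw Hu) as Hx.
    destruct (IH (subst_eqs (bind_var x w) E2)) with th as [s Hs].
    - left. eapply Nat.lt_le_trans; [apply eqs_nvars_bind_var; auto | apply Hvars; auto].
    - apply unifies_bind_var; auto.
    - eexists; apply mgu_eqs_bind_var; eauto. }
  destruct E as [|[u v] E'].
  - exists (@Var F). split; [constructor | intros; reflexivity].
  - destruct u as [x|f us], v as [y|g vs].
    + destruct (Nat.eq_dec x y) as [<-|Hxy]; [|apply Hbind; auto using incl_refl; congruence].
      destruct (IH E') with th as [s Hs].
      * right. split; [|simpl; lia].
        apply Hvars. rewrite eqs_vars_cons. intros a Ha. rewrite !in_app_iff; auto.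
      * apply unifies_cons in Hth; tauto.
      * exists s. apply mgu_eqs_trivial; auto.
    + apply Hbind; auto using incl_refl. discriminate.
    + destruct (Hbind y (Fn f us) E') as [s Hs].
      * rewrite !eqs_vars_cons. cbn [fst snd]. intros a Ha. rewrite !in_app_iff in *. tauto.
      * discriminate.
      * apply unifies_orient; auto.
      * exists s. apply mgu_eqs_orient; auto.
    + apply unifies_decompose in Hth as [<- [Hl Hu]].
      destruct (IH (combine us vs ++ E')) with th as [s Hs]; auto.
      * right. split; [apply Hvars, eqs_vars_decompose | apply eqs_size_decompose; auto].
      * exists s. apply mgu_eqs_decompose; auto.
Qed.

End Unification.

Section Multiset.
Variable A : Type.
Variable R : A -> A -> Prop.

Definition mult1 (N M : list A) : Prop :=
  exists M0 a K, Permutation M (a :: M0) /\ Permutation N (K ++ M0) /\ forall k, In k K -> R k a.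

Lemma Acc_mult1_perm M M' : Acc mult1 M -> Permutation M M' -> Acc mult1 M'.
Proof.
  intros H P. constructor. intros N [M0 [a [K [H1 [H2 H3]]]]].
  apply (Acc_inv H). exists M0, a, K. split; auto. eapply perm_trans; eauto.
Qed.

Lemma in_perm_cons (a : A) l : In a l -> exists l', Permutation l (a :: l').
Proof.
  intros H. apply in_split in H as [l1 [l2 ->]]. exists (l1 ++ l2).
  apply Permutation_sym, Permutation_middle.
Qed.

Lemma mult1_cons_inv N a M0 : mult1 N (a :: M0) ->
  (exists M, mult1 M M0 /\ Permutation N (a :: M)) \/
  (exists K, (forall b, In b K -> R b a) /\ Permutation N (K ++ M0)).
Proof.
  intros [M1 [b [K [H1 [H2 H3]]]]].
  destruct (classic (a = b)) as [<-|Hne].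
  - right. exists K. split; auto. eapply perm_trans; [exact H2|].
    apply Permutation_app_head. apply Permutation_cons_inv with a. apply Permutation_sym; auto.
  - left. assert (Ha : In a M1).
    { assert (In a (b :: M1)) by (eapply Permutation_in; eauto; simpl; auto).
      destruct H; auto. congruence. }
    apply in_perm_cons in Ha as [M2 HM2].
    assert (HM0 : Permutation M0 (b :: M2)).
    { apply Permutation_cons_inv with a. eapply perm_trans; [exact H1|].
      eapply perm_trans; [apply perm_skip; exact HM2|]. apply perm_swap. }
    exists (K ++ M2). split.
    + exists M2, b, K. split; auto.
    + eapply perm_trans; [exact H2|]. eapply perm_trans; [apply Permutation_app_head; exact HM2|].
      apply Permutation_sym, Permutation_middle.
Qed.

Lemma Acc_mult1_cons_step a :
  (forall b, R b a -> forall M, Acc mult1 M -> Acc mult1 (b :: M)) ->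
  forall M0, Acc mult1 M0 -> Acc mult1 (a :: M0).
Proof.
  intros H M0 HM0. induction HM0 as [M0 HM0 IH].
  constructor. intros N HN. apply mult1_cons_inv in HN as [[M [H1 H2]]|[K [H1 H2]]].
  - apply Acc_mult1_perm with (a :: M); [apply IH; auto| apply Permutation_sym; auto].
  - apply Acc_mult1_perm with (K ++ M0); [|apply Permutation_sym; auto].
    clear H2. induction K; simpl; [constructor; auto|].
    apply H; [apply H1; simpl; auto|]. apply IHK. intros; apply H1; simpl; auto.
Qed.

Lemma Acc_mult1_cons a : Acc R a -> forall M, Acc mult1 M -> Acc mult1 (a :: M).
Proof.
  intros Ha. induction Ha as [a Ha IH]. intros M HM. apply Acc_mult1_cons_step; auto.
Qed.

Lemma wf_mult1 : well_founded R -> well_founded mult1.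
Proof.
  intros W M. induction M.
  - constructor. intros N [M0 [a [K [H1 _]]]]. apply Permutation_nil in H1. discriminate.
  - apply Acc_mult1_cons; auto.
Qed.

Lemma split_dominated (x : A) X' Y :
  (forall y, In y Y -> exists x0, In x0 (x :: X') /\ R y x0) ->
  exists Y1 Y2, Permutation Y (Y1 ++ Y2) /\ (forall y, In y Y1 -> R y x) /\
    (forall y, In y Y2 -> exists x0, In x0 X' /\ R y x0).
Proof.
  induction Y as [|y Y IH]; intros H.
  - exists [], []. simpl; split; auto. split; intros _ [].
  - destruct IH as [Y1 [Y2 [P [H1 H2]]]]; [intros; apply H; simpl; auto|].
    destruct (classic (R y x)).
    + exists (y :: Y1), Y2. split; [simpl; apply perm_skip; auto|]. split; auto.
      intros z [<-|Hz]; auto.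
    + exists Y1, (y :: Y2). split.
      { eapply perm_trans; [apply perm_skip; exact P|]. apply Permutation_middle. }
      split; auto. intros z [<-|Hz]; auto.
      destruct (H y) as [x0 [[<-|Hx0] Hr]]; simpl; auto. contradiction. eauto.
Qed.

Lemma mul_lt_clos_trans_mult1 N M : mul_lt R N M -> clos_trans _ mult1 N M.
Proof.
  intros [Z [X [Y [HM [HN [HX HY]]]]]]. revert Z Y N M HM HN HY.
  induction X as [|x X' IH]; [congruence|]. intros Z Y N M HM HN HY.
  destruct (split_dominated Y HY) as [Y1 [Y2 [P [H1 H2]]]].
  destruct X' as [|x' X''].
  - apply t_step. exists Z, x, Y1. split.
    { eapply perm_trans; [exact HM|]. apply Permutation_sym, Permutation_cons_append. }
    split; auto. destruct Y2 as [|y2 Y2]; [|destruct (H2 y2) as [? [[] _]]; simpl; auto].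
    rewrite app_nil_r in P. eapply perm_trans; [exact HN|].
    eapply perm_trans; [apply Permutation_app_head; exact P|]. apply Permutation_app_comm.
  - apply t_trans with (Z ++ Y1 ++ x' :: X'').
    + apply IH with (Z ++ Y1) Y2; auto; try congruence.
      * rewrite app_assoc; auto.
      * eapply perm_trans; [exact HN|]. rewrite <- app_assoc. apply Permutation_app_head; auto.
    + apply t_step. exists (Z ++ x' :: X''), x, Y1. split.
      * eapply perm_trans; [exact HM|]. apply Permutation_sym, Permutation_middle.
      * split; auto. rewrite app_assoc.
        eapply perm_trans; [apply Permutation_app_tail, Permutation_app_comm|].
        rewrite <- app_assoc. auto.
Qed.

Theorem wf_mul_lt : well_founded R -> well_founded (mul_lt R).
Proof.
  intros W. apply wf_incl with (clos_trans _ mult1).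
  - intros N M H. apply mul_lt_clos_trans_mult1; auto.
  - apply wf_clos_trans, wf_mult1; auto.
Qed.

Lemma mul_lt_perm N N' M M' :
  Permutation N N' -> Permutation M M' -> mul_lt R N M -> mul_lt R N' M'.
Proof.
  intros PN PM [Z [X [Y [H1 [H2 H3]]]]]. exists Z, X, Y. split; [|split]; auto.
  - apply perm_trans with M; auto. apply Permutation_sym; auto.
  - apply perm_trans with N; auto. apply Permutation_sym; auto.
Qed.

Lemma mul_lt_singleton N b : mul_lt R N [b] <-> forall y, In y N -> R y b.
Proof.
  split.
  - intros [Z [X [Y [H1 [H2 [H3 H4]]]]]].
    assert (HZ : Z = []).
    { apply Permutation_length in H1. rewrite length_app in H1. simpl in H1.
      destruct X; [congruence|]. destruct Z; simpl in H1; auto. lia. }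
    subst Z. simpl in *. apply Permutation_length_1_inv in H1. subst X.
    intros y Hy. destruct (H4 y) as [x [[<-|[]] Hr]]; auto.
    eapply Permutation_in; eauto.
  - intros H. exists [], [b], N. simpl. split; auto. split; auto. split; [congruence|].
    intros y Hy; exists b; auto.
Qed.

Lemma mul_lt_pair N b : mul_lt R N [b; b] ->
  (forall y, In y N -> R y b) \/ exists Y, Permutation N (b :: Y) /\ forall y, In y Y -> R y b.
Proof.
  intros [Z [X [Y [H1 [H2 [H3 H4]]]]]].
  assert (Hb : forall z, In z (Z ++ X) -> z = b).
  { intros z Hz. apply Permutation_sym in H1. eapply Permutation_in in Hz; eauto.
    destruct Hz as [<-|[<-|[]]]; auto. }
  assert (Hdom : forall y, In y Y -> R y b).
  { intros y Hy. destruct (H4 y Hy) as [x [Hx Hr]]. rewrite (Hb x) in Hr; auto.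
    apply in_or_app; auto. }
  destruct Z as [|z Z].
  - left. intros y Hy. apply Hdom. eapply Permutation_in; eauto.
  - right. exists (Z ++ Y). rewrite (Hb z) in H2; simpl; auto. split; auto.
    intros y Hy. apply in_app_iff in Hy as [Hy|Hy]; auto.
    exfalso. apply Permutation_length in H1. simpl in H1. rewrite length_app in H1.
    destruct X; [congruence|]. destruct Z; [destruct Hy|]. simpl in H1. lia.
Qed.

End Multiset.

Section Literals.
Variables F P : Type.
Variable lt : atom F P -> atom F P -> Prop.
Hypothesis lt_trans : forall A B C, lt A B -> lt B C -> lt A C.

Definition lit_lt_atoms (L1 L2 : lit F P) : Prop :=
  match L1, L2 with
  | Pos a, Pos b => lt a b
  | Neg a, Pos b => lt a b
  | Pos a, Neg b => lt a b \/ a = b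
  | Neg a, Neg b => lt a b
  end.

Lemma lit_lt_iff L1 L2 : lit_lt lt L1 L2 <-> lit_lt_atoms L1 L2.
Proof.
  unfold lit_lt. destruct L1 as [a|a], L2 as [b|b]; simpl.
  - rewrite mul_lt_singleton. split; [intros H; apply H; simpl; auto| intros H y [<-|[]]; auto].
  - split.
    + intros H. apply mul_lt_pair in H as [H|[Y [H1 H2]]].
      * left; apply H; simpl; auto.
      * right. apply Permutation_length_1_inv in H1. congruence.
    + intros [H|<-].
      * exists [], [b; b], [a]. simpl. repeat split; auto; try congruence.
        intros y [<-|[]]; exists b; auto.
      * exists [a], [a], []. simpl. repeat split; auto; try congruence. intros y [].
  - rewrite mul_lt_singleton.
    split; [intros H; apply H; simpl; auto | intros H y [<-|[<-|[]]]; auto].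
  - split.
    + intros H. apply mul_lt_pair in H as [H|[Y [H1 H2]]].
      * apply H; simpl; auto.
      * assert (Hb : In b [a; a])
          by (apply Permutation_sym in H1; eapply Permutation_in; eauto; simpl; auto).
        assert (a = b) as <- by (destruct Hb as [->|[->|[]]]; auto).
        apply H2. apply Permutation_cons_inv in H1. eapply Permutation_in; eauto. simpl; auto.
    + intros H. exists [], [b; b], [a; a]. simpl. repeat split; auto; try congruence.
      intros y [<-|[<-|[]]]; exists b; auto.
Qed.

Lemma lit_lt_trans L1 L2 L3 : lit_lt lt L1 L2 -> lit_lt lt L2 L3 -> lit_lt lt L1 L3.
Proof.
  rewrite !lit_lt_iff. destruct L1, L2, L3; simpl; intros;
  repeat match goal with H : _ \/ _ |- _ => destruct H end; subst; eauto.
Qed.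

Lemma lit_le_lt_trans L1 L2 L3 : lit_le lt L1 L2 -> lit_lt lt L2 L3 -> lit_lt lt L1 L3.
Proof. intros [->|H] H2; auto. eapply lit_lt_trans; eauto. Qed.

Lemma lit_lt_pos_neg a : lit_lt lt (Pos a) (Neg a).
Proof. rewrite lit_lt_iff; simpl; auto. Qed.

Definition lit_atom (L : lit F P) := match L with Pos a => a | Neg a => a end.

Lemma lit_lt_total L1 L2 :
  (lit_atom L1 <> lit_atom L2 ->
     lt (lit_atom L1) (lit_atom L2) \/ lt (lit_atom L2) (lit_atom L1)) ->
  L1 = L2 \/ lit_lt lt L1 L2 \/ lit_lt lt L2 L1.
Proof.
  intros H. rewrite !lit_lt_iff. destruct L1 as [a|a], L2 as [b|b]; simpl in *;
  destruct (classic (a = b)) as [<-|Hne]; auto; destruct (H Hne); auto.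
Qed.

Lemma wf_lit_lt : well_founded lt -> well_founded (lit_lt lt).
Proof.
  intros W. unfold lit_lt. apply wf_inverse_image with (f := @lit_ms F P), wf_mul_lt; auto.
Qed.

End Literals.

Section Normalization.
Variable F : Type.
Variable ar : F -> nat.

Definition sdc_size (l : sdc F) : nat :=
  fold_right (fun c n => size (fst c) + size (snd c) + n) 0 l.
Definition norm_measure (o : option (sdc F)) : nat :=
  match o with None => 0 | Some l => S (sdc_size l) end.

Lemma sdc_size_perm l l' : Permutation l l' -> sdc_size l = sdc_size l'.
Proof. induction 1; simpl; lia. Qed.

Lemma sdc_size_cons c l : sdc_size (c :: l) = size (fst c) + size (snd c) + sdc_size l.
Proof. reflexivity. Qed.

Lemma norm_step_decreases o o' : norm_step o o' -> norm_measure o' < norm_measure o.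
Proof.
  destruct 1; simpl; try lia; apply sdc_size_perm in H; rewrite H, !sdc_size_cons; cbn [fst snd].
  - assert (size (nth i ts d) <= sizes ts) by (apply sizes_In, nth_In; auto).
    assert (size (nth i ss d) <= sizes ss) by (apply sizes_In, nth_In; auto).
    rewrite !size_Fn. lia.
  - pose proof (size_pos (Fn f ts)). lia.
  - pose proof (size_pos (Var x : term F)). lia.
Qed.

Lemma is_norm_exists (o : option (sdc F)) : exists o', is_norm o o'.
Proof.
  induction o as [o IH] using (well_founded_induction (well_founded_ltof _ norm_measure)).
  destruct (classic (exists o'', norm_step o o'')) as [[o'' Hs]|Hn].
  - destruct (IH o'') as [o' [H1 H2]]; [apply norm_step_decreases; auto|].
    exists o'. split; auto. eapply rt_trans; [apply rt_step; eauto | auto].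
  - exists o. split; auto. apply rt_refl.
Qed.

Lemma straight_linear f (ts : list (term F)) : straight (Fn f ts) -> linear (Fn f ts).
Proof. inversion 1; auto. Qed.

Lemma vars_map_Var (xs : list nat) : flat_map vars (map (@Var F) xs) = xs.
Proof. induction xs; simpl; auto. f_equal; auto. Qed.

Lemma Forall_is_var_map (ys : list (term F)) : Forall is_var ys -> exists xs, ys = map Var xs.
Proof.
  induction 1; [exists []; auto|]. destruct IHForall as [xs ->]. destruct H as [z ->].
  exists (z :: xs); auto.
Qed.

Lemma exists_subst_on_vars (xs : list nat) (us : list (term F)) :
  NoDup xs -> length xs = length us -> exists tau : nat -> term F, map tau xs = us.
Proof.
  revert us. induction xs as [|x xs IH]; intros [|u us] Hn Hl; simpl in Hl; try discriminate.
  - exists (@Var F); auto.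
  - inversion Hn; subst. destruct (IH us) as [tau Ht]; auto.
    exists (fun y => if Nat.eq_dec y x then u else tau y). simpl.
    destruct (Nat.eq_dec x x); [|congruence]. f_equal. rewrite <- Ht. apply map_ext_in.
    intros y Hy. destruct (Nat.eq_dec y x); subst; tauto.
Qed.

Lemma instance_of_linear_flat f (us : list (term F)) xs :
  NoDup xs -> length us = length xs -> instance_of (Fn f us) (Fn f (map Var xs)).
Proof.
  intros Hn Hl. destruct (@exists_subst_on_vars xs us Hn (eq_sym Hl)) as [tau Ht].
  exists tau. rewrite subst_Fn, map_map. simpl. rewrite <- Ht. reflexivity.
Qed.

Lemma NoDup_app_disjoint (a b : list nat) x : NoDup (a ++ b) -> In x a -> In x b -> False.
Proof.
  induction a; simpl; [intros _ []|]. intros H [->|Ha] Hb; inversion H; subst; eauto.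
  apply H2. apply in_or_app; auto.
Qed.

Lemma instance_of_straight_arg (f : F) (us1 us2 : list (term F)) (u s : term F) xs1 xs2 :
  linear (Fn f (map Var xs1 ++ s :: map Var xs2)) ->
  length us1 = length xs1 -> length us2 = length xs2 -> instance_of u s ->
  instance_of (Fn f (us1 ++ u :: us2)) (Fn f (map Var xs1 ++ s :: map Var xs2)).
Proof.
  intros Hlin L1 L2 [tau Ht].
  unfold linear in Hlin. rewrite vars_Fn, flat_map_app in Hlin. simpl in Hlin.
  rewrite !vars_map_Var in Hlin.
  assert (Hd1 : forall x, In x xs1 -> ~ In x (vars s ++ xs2))
    by (intros x H1 H2; exact (NoDup_app_disjoint _ _ _ Hlin H1 H2)).
  apply NoDup_app_remove_l in Hlin as Hlin2.
  assert (Hd2 : forall x, In x (vars s) -> ~ In x xs2)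
    by (intros x H1 H2; exact (NoDup_app_disjoint _ _ _ Hlin2 H1 H2)).
  destruct (@exists_subst_on_vars xs1 us1) as [tau1 Ht1]; auto.
  { eapply NoDup_app_remove_r; eauto. }
  destruct (@exists_subst_on_vars xs2 us2) as [tau2 Ht2]; auto.
  { eapply NoDup_app_remove_l; eauto. }
  exists (fun x => if in_dec Nat.eq_dec x xs1 then tau1 x
           else if in_dec Nat.eq_dec x xs2 then tau2 x else tau x).
  rewrite subst_Fn, map_app. cbn [map]. rewrite !map_map. simpl.
  rewrite <- Ht1, <- Ht2. f_equal. f_equal; [|f_equal].
  - apply map_ext_in. intros x Hx. destruct (in_dec Nat.eq_dec x xs1); tauto.
  - rewrite Ht. apply subst_ext. intros x Hx.
    destruct (in_dec Nat.eq_dec x xs1) as [Hx1|].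
    { exfalso. apply (Hd1 x Hx1). apply in_or_app; auto. }
    destruct (in_dec Nat.eq_dec x xs2) as [Hx2|]; auto. exfalso; eapply Hd2; eauto.
  - apply map_ext_in. intros x Hx.
    destruct (in_dec Nat.eq_dec x xs1) as [Hx1|].
    { exfalso. apply (Hd1 x Hx1). apply in_or_app; auto. }
    destruct (in_dec Nat.eq_dec x xs2); tauto.
Qed.

Lemma straight_complex_arg (l1 l2 : list (term F)) (s : term F) i d :
  Forall is_var l1 -> Forall is_var l2 -> i < length (l1 ++ s :: l2) ->
  complex (nth i (l1 ++ s :: l2) d) -> i = length l1.
Proof.
  intros Hv1 Hv2 Hi Hc. rewrite Forall_forall in Hv1, Hv2.
  destruct (Nat.lt_trichotomy i (length l1)) as [Hlt|[Heq|Hgt]]; auto; exfalso; apply Hc.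
  - rewrite app_nth1 by auto. apply Hv1, nth_In; auto.
  - rewrite app_nth2 by lia. destruct (i - length l1) eqn:E; [lia|]. simpl.
    apply Hv2, nth_In. rewrite length_app in Hi. simpl in Hi. lia.
Qed.

Definition ground_wf_sdc (dl : nat -> term F) (pi : sdc F) : Prop :=
  forall c, In c pi -> wf ar (subst dl (fst c)) /\ wf ar (snd c) /\ straight (snd c).
Definition solves (dl : nat -> term F) (pi : sdc F) : Prop :=
  forall c, In c pi -> ~ instance_of (subst dl (fst c)) (snd c).

Lemma in_perm_head {A} (l r : list A) a : Permutation l (a :: r) -> In a l.
Proof. intros H. eapply Permutation_in; [apply Permutation_sym; eauto | simpl; auto]. Qed.

Lemma in_perm_tail {A} (l r : list A) a c : Permutation l (a :: r) -> In c r -> In c l.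
Proof. intros H Hc. eapply Permutation_in; [apply Permutation_sym; eauto | simpl; auto]. Qed.

Lemma norm_step_decompose_solution dl pi r f ts ss i d :
  ground_wf_sdc dl pi -> solves dl pi ->
  Permutation pi ((Fn f ts, Fn f ss) :: r) ->
  i < length ts -> i < length ss -> complex (nth i ss d) ->
  ground_wf_sdc dl ((nth i ts d, nth i ss d) :: r) /\
  solves dl ((nth i ts d, nth i ss d) :: r).
Proof.
  intros HI HS Hp Hts Hss Hc.
  pose proof (in_perm_head Hp) as Hin.
  destruct (HI _ Hin) as [W1 [W2 S2]]. cbn [fst snd] in W1, W2, S2.
  rewrite subst_Fn in W1. apply wf_Fn in W1 as [L1 W1]. apply wf_Fn in W2 as [L2 W2].
  rewrite length_map in L1.
  inversion S2 as [|f' ss' Hlin Hv|f' l1 s l2 Hlin Hv1 Hv2 Ss]; subst.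
  { exfalso. rewrite Forall_forall in Hv. apply Hc, Hv, nth_In; auto. }
  pose proof (@straight_complex_arg l1 l2 s i d Hv1 Hv2 Hss Hc); subst i. rewrite nth_middle in *.
  unfold ground_wf_sdc, solves.
  split; intros c [<-|Hc']; [| apply HI; eauto using in_perm_tail | |
                                apply HS; eauto using in_perm_tail]; simpl.
  - rewrite Forall_forall in W1, W2. split; [|split]; auto.
    + apply W1. apply in_map, nth_In; auto.
    + apply W2. apply in_or_app; simpl; auto.
  - intros Hinst. apply (HS _ Hin). simpl.
    destruct (nth_split ts d Hts) as [ts1 [ts2 [Ets Hl1]]].
    apply Forall_is_var_map in Hv1 as [xs1 ->]. apply Forall_is_var_map in Hv2 as [xs2 ->].
    assert (Lts : length ts = length xs1 + S (length xs2)).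
    { rewrite L1, <- L2, length_app. simpl. rewrite !length_map. lia. }
    rewrite length_map in *. rewrite Ets, length_app in Lts. simpl in Lts.
    rewrite Ets, map_app. simpl.
    apply instance_of_straight_arg; auto; rewrite length_map; lia.
Qed.

Lemma norm_step_solution dl pi o : norm_step (Some pi) o ->
  ground_wf_sdc dl pi -> solves dl pi ->
  exists pi2, o = Some pi2 /\ ground_wf_sdc dl pi2 /\ solves dl pi2.
Proof.
  intros Hs HI HS. inversion Hs; subst.
  - exfalso. apply (HS _ (in_perm_head H0)).
    exists (fun _ => subst dl (Fn f ts)). reflexivity.
  - exfalso. pose proof (in_perm_head H0) as Hin.
    destruct (HI _ Hin) as [W1 [W2 S2]]. cbn [fst snd] in W1, W2, S2.
    apply (HS _ Hin). simpl.
    apply Forall_is_var_map in H1 as [xs ->].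
    apply straight_linear in S2 as Hlin. unfold linear in Hlin.
    rewrite vars_Fn, vars_map_Var in Hlin.
    rewrite subst_Fn in W1. apply wf_Fn in W1 as [L1 _]. apply wf_Fn in W2 as [L2 _].
    rewrite length_map in L1, L2.
    apply instance_of_linear_flat; auto. rewrite length_map; congruence.
  - eexists; split; [reflexivity|]. eapply norm_step_decompose_solution; eauto.
  - exists r. split; auto. split; intros c Hc; [apply HI | apply HS]; eauto using in_perm_tail.
  - exists ((Var x, s) :: r). split; auto.
    split; intros c [<-|Hc]; [apply HI | apply HI | apply HS | apply HS];
      eauto using in_perm_head, in_perm_tail.
    all: eapply in_perm_tail; eauto; simpl; auto.
Qed.

Lemma norm_solution dl pi o : clos_refl_trans _ norm_step (Some pi) o ->
  ground_wf_sdc dl pi -> solves dl pi ->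
  exists pi2, o = Some pi2 /\ ground_wf_sdc dl pi2 /\ solves dl pi2.
Proof.
  intros H. apply clos_rt_rt1n in H. remember (Some pi) as o0. revert pi Heqo0.
  induction H; intros pi E HI HS; subst; eauto.
  destruct (norm_step_solution H HI HS) as [pi2 [-> [H3 H4]]]. eauto.
Qed.

End Normalization.

Section Clauses.
Variables F P : Type.
Notation comp s1 s2 := (fun x => subst s2 (s1 x)).

Lemma subst_atom_comp (s1 s2 : nat -> term F) (A : atom F P) :
  subst_atom s2 (subst_atom s1 A) = subst_atom (comp s1 s2) A.
Proof. destruct A; simpl; rewrite !subst_comp; auto. Qed.

Lemma subst_atom_ext (s1 s2 : nat -> term F) (A : atom F P) :
  (forall x, In x (atom_vars A) -> s1 x = s2 x) -> subst_atom s1 A = subst_atom s2 A.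
Proof.
  destruct A; unfold atom_vars; simpl; intros H; f_equal; apply subst_ext; intros; apply H;
  rewrite ?app_nil_r, ?in_app_iff; auto.
Qed.

Lemma subst_lit_ext (s1 s2 : nat -> term F) (L : lit F P) :
  (forall x, In x (atom_vars (lit_atom L)) -> s1 x = s2 x) -> subst_lit s1 L = subst_lit s2 L.
Proof. destruct L; simpl; intros; f_equal; apply subst_atom_ext; auto. Qed.

Lemma subst_atom_absorb (th sg : nat -> term F) (A : atom F P) :
  (forall x, th x = subst th (sg x)) -> subst_atom th (subst_atom sg A) = subst_atom th A.
Proof. intros H. rewrite subst_atom_comp. apply subst_atom_ext. intros; symmetry; auto. Qed.

Lemma subst_lit_absorb (th sg : nat -> term F) (L : lit F P) :
  (forall x, th x = subst th (sg x)) -> subst_lit th (subst_lit sg L) = subst_lit th L.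
Proof. intros H. destruct L; simpl; rewrite subst_atom_absorb; auto. Qed.

Lemma subst_clause_absorb (th sg : nat -> term F) (C : clause F P) :
  (forall x, th x = subst th (sg x)) -> subst_clause th (subst_clause sg C) = subst_clause th C.
Proof.
  intros H. destruct C; unfold subst_clause; simpl; rewrite !map_map.
  f_equal; apply map_ext; intros; apply subst_atom_absorb; auto.
Qed.

Lemma atom_unifier_mgu (A B : atom F P) th :
  subst_atom th A = subst_atom th B ->
  exists s, is_mgu s A B /\ forall x, th x = subst th (s x).
Proof.
  intros H. destruct A as [p a|a1 a2], B as [q b|b1 b2]; simpl in H; try discriminate.
  - injection H as -> H.
    destruct (@unifiable_has_mgu _ [(a, b)] th) as [s [U M]]; [constructor; auto|].
    exists s. split; [split|].
    + simpl. apply unifies_cons in U as [U _]. simpl in U. rewrite U; auto.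
    + intros th' Hth'. simpl in Hth'. injection Hth' as Hth'. exists th'. apply M.
      constructor; auto.
    + apply M. constructor; auto.
  - injection H as H1 H2.
    destruct (@unifiable_has_mgu _ [(a1, b1); (a2, b2)] th) as [s [U M]].
    { repeat constructor; auto. }
    exists s. split; [split|].
    + simpl. inversion U as [|? ? U1 U2]; inversion U2; subst; simpl in *. congruence.
    + intros th' Hth'. simpl in Hth'. injection Hth' as Hth1 Hth2. exists th'. apply M.
      repeat constructor; auto.
    + apply M. repeat constructor; auto.
Qed.

Lemma lits_subst (s : nat -> term F) (C : clause F P) :
  lits (subst_clause s C) = map (subst_lit s) (lits C).
Proof.
  destruct C as [G D]; unfold lits, subst_clause; simpl. rewrite map_app, !map_map. reflexivity.
Qed.

Lemma lit_atom_subst (s : nat -> term F) (L : lit F P) :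
  lit_atom (subst_lit s L) = subst_atom s (lit_atom L).
Proof. destruct L; auto. Qed.

Lemma In_lits (L : lit F P) (C : clause F P) :
  In L (lits C) <-> (exists A, L = Neg A /\ In A (fst C)) \/ (exists A, L = Pos A /\ In A (snd C)).
Proof.
  destruct C as [G D]; unfold lits; simpl. rewrite in_app_iff, !in_map_iff.
  split; intros [[A [H1 H2]]|[A [H1 H2]]]; [left|right|left|right]; exists A; auto.
Qed.

Lemma atom_vars_clause (L : lit F P) (C : clause F P) x :
  In L (lits C) -> In x (atom_vars (lit_atom L)) -> In x (clause_vars C).
Proof.
  intros HL Hx. apply In_lits in HL as [[A [-> HA]]|[A [-> HA]]]; unfold clause_vars;
  apply in_app_iff; [left|right]; apply in_flat_map; eauto.
Qed.

Lemma atom_vars_clause_fst (A : atom F P) (C : clause F P) x :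
  In A (fst C) -> In x (atom_vars A) -> In x (clause_vars C).
Proof. intros H1 H2. apply atom_vars_clause with (L := Neg A); auto. apply In_lits; eauto. Qed.

Lemma atom_vars_clause_snd (A : atom F P) (C : clause F P) x :
  In A (snd C) -> In x (atom_vars A) -> In x (clause_vars C).
Proof. intros H1 H2. apply atom_vars_clause with (L := Pos A); auto. apply In_lits; eauto. Qed.

Lemma subst_clause_ext (s1 s2 : nat -> term F) (C : clause F P) :
  (forall x, In x (clause_vars C) -> s1 x = s2 x) -> subst_clause s1 C = subst_clause s2 C.
Proof.
  intros H. destruct C as [G D]; unfold subst_clause; simpl.
  f_equal; apply map_ext_in; intros A HA; apply subst_atom_ext; intros x Hx; apply H.
  - apply atom_vars_clause_fst with A; auto.
  - apply atom_vars_clause_snd with A; auto.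
Qed.

Lemma subst_rename_atom th (r : nat -> nat) d (A : atom F P) :
  (forall x, th (r x) = d x) -> subst_atom th (subst_atom (fun x => Var (r x)) A) = subst_atom d A.
Proof. intros H. destruct A; simpl; f_equal; apply subst_rename; auto. Qed.

Lemma subst_rename_lit th (r : nat -> nat) d (L : lit F P) :
  (forall x, th (r x) = d x) -> subst_lit th (subst_lit (fun x => Var (r x)) L) = subst_lit d L.
Proof. intros H. destruct L; simpl; erewrite subst_rename_atom; eauto. Qed.

Lemma subst_rename_clause th (r : nat -> nat) d (C : clause F P) :
  (forall x, th (r x) = d x) ->
  subst_clause th (subst_clause (fun x => Var (r x)) C) = subst_clause d C.
Proof.
  intros H. destruct C; unfold subst_clause; simpl; rewrite !map_map.
  f_equal; apply map_ext; intros; eapply subst_rename_atom; eauto.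
Qed.

Definition clause_app (C D : clause F P) : clause F P := (fst C ++ fst D, snd C ++ snd D).

Lemma clause_vars_incl (G G' D D' : list (atom F P)) :
  incl G G' -> incl D D' -> incl (clause_vars (G, D)) (clause_vars (G', D')).
Proof.
  intros HG HD x Hx. unfold clause_vars in *; simpl in *. rewrite in_app_iff, !in_flat_map in *.
  destruct Hx as [[A [HA Hx]]|[A [HA Hx]]]; [left|right]; exists A; auto.
Qed.

Lemma subst_agree_sub_clause s1 s2 (G D G' D' : list (atom F P)) :
  (forall x, In x (clause_vars (G, D)) -> s1 x = s2 x) -> incl G' G -> incl D' D ->
  subst_clause s1 (G', D') = subst_clause s2 (G', D') /\
  (forall L, In L (lits (G', D')) -> subst_lit s1 L = subst_lit s2 L).
Proof.
  intros H HG HD. assert (H' := fun x Hx => H x (clause_vars_incl HG HD x Hx)).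
  split; [apply subst_clause_ext; auto|].
  intros L HL. apply subst_lit_ext. intros x Hx. apply H'. eapply atom_vars_clause; eauto.
Qed.

Lemma lits_clause_app (C D : clause F P) : Permutation (lits (clause_app C D)) (lits C ++ lits D).
Proof.
  destruct C as [g p], D as [a d]. unfold lits, clause_app; simpl. rewrite !map_app.
  rewrite <- !app_assoc. apply Permutation_app_head.
  rewrite !app_assoc. apply Permutation_app_tail. apply Permutation_app_comm.
Qed.

Lemma lits_neg_middle (a b d : list (atom F P)) x :
  Permutation (lits (a ++ x :: b, d)) (Neg x :: lits (a ++ b, d)).
Proof.
  unfold lits; simpl. rewrite !map_app. simpl. rewrite <- !app_assoc. simpl.
  apply Permutation_sym, Permutation_middle.
Qed.

Lemma lits_pos_middle (g a b : list (atom F P)) x :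
  Permutation (lits (g, a ++ x :: b)) (Pos x :: lits (g, a ++ b)).
Proof.
  unfold lits; simpl. rewrite !map_app. simpl. rewrite app_assoc.
  apply Permutation_sym. rewrite app_assoc. apply Permutation_middle.
Qed.

Lemma lits_incl (G1 G2 D1 D2 : list (atom F P)) L :
  incl G1 G2 -> incl D1 D2 -> In L (lits (G1, D1)) -> In L (lits (G2, D2)).
Proof.
  intros H1 H2 HL. apply In_lits in HL as [[A [-> HA]]|[A [-> HA]]]; apply In_lits;
    [left|right]; exists A; split; auto; simpl in *; auto.
Qed.

Lemma subst_clause_middle s (G Da Db : list (atom F P)) A :
  subst_clause s (G, Da ++ A :: Db) =
  (map (subst_atom s) G, map (subst_atom s) Da ++ subst_atom s A :: map (subst_atom s) Db).
Proof. unfold subst_clause; simpl. rewrite map_app. reflexivity. Qed.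

Lemma gsat_incl (I : atom F P -> Prop) (C D : clause F P) :
  incl (fst C) (fst D) -> incl (snd C) (snd D) -> gsat I C -> gsat I D.
Proof. intros H1 H2 [[A [HA HI]]|[A [HA HI]]]; [left|right]; exists A; auto. Qed.

Lemma gsat_clause_app (I : atom F P -> Prop) (C D : clause F P) :
  gsat I (clause_app C D) -> gsat I C \/ gsat I D.
Proof.
  unfold gsat, clause_app; simpl.
  intros [[A [HA HI]]|[A [HA HI]]]; apply in_app_iff in HA as [HA|HA]; eauto.
Qed.

Lemma not_gsat_iff (I : atom F P -> Prop) (D : clause F P) :
  ~ gsat I D <-> (forall A, In A (snd D) -> ~ I A) /\ (forall A, In A (fst D) -> I A).
Proof.
  unfold gsat. split.
  - intros H. split.
    + intros A HA HI; apply H; left; eauto.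
    + intros A HA. apply NNPP. intros HI. apply H. right. eauto.
  - intros [H1 H2] [[A [HA HI]]|[A [HA HI]]]; [eapply H1|]; eauto.
Qed.

Lemma gsat_perm (I : atom F P -> Prop) (D D' : clause F P) :
  clause_perm D D' -> gsat I D -> gsat I D'.
Proof.
  intros [P1 P2] [[A [HA HI]]|[A [HA HI]]]; [left|right]; exists A; split; auto;
  eapply Permutation_in; eauto.
Qed.

Lemma lits_perm (C D : clause F P) : clause_perm C D -> Permutation (lits C) (lits D).
Proof. intros [P1 P2]. unfold lits. apply Permutation_app; apply Permutation_map; auto. Qed.

Lemma vars_rename_image (r : nat -> nat) (t : term F) x :
  In x (vars (subst (fun y => Var (r y)) t)) -> exists y, x = r y.
Proof. intros H. apply vars_subst in H as [y [_ [H|[]]]]. eauto. Qed.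

Lemma atom_vars_rename_image (r : nat -> nat) (A : atom F P) x :
  In x (atom_vars (subst_atom (fun y => Var (r y)) A)) -> exists y, x = r y.
Proof.
  unfold atom_vars. intros H. apply in_flat_map in H as [t [Ht Hx]].
  destruct A; simpl in Ht; repeat destruct Ht as [<-|Ht]; try destruct Ht;
    eapply vars_rename_image; eauto.
Qed.

Lemma cclause_vars_rename_image (r : nat -> nat) (C : cclause F P) x :
  In x (cclause_vars (rename r C)) -> exists y, x = r y.
Proof.
  destruct C as [[G D] pi].
  unfold cclause_vars, rename, clause_vars, sdc_lhs_vars, subst_clause, subst_sdc; simpl.
  rewrite !in_app_iff. intros [[H|H]|H]; apply in_flat_map in H as [a [Ha Hx]];
    apply in_map_iff in Ha as [b [<- Hb]]; simpl in Hx.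
  - eapply atom_vars_rename_image; eauto.
  - eapply atom_vars_rename_image; eauto.
  - eapply vars_rename_image; eauto.
Qed.

Lemma atom_vars_rename (r : nat -> nat) (A : atom F P) :
  atom_vars (subst_atom (fun y => Var (r y)) A) = map r (atom_vars A).
Proof.
  unfold atom_vars. destruct A; simpl; rewrite ?app_nil_r, !vars_rename, ?map_app; auto.
Qed.

Lemma selected_rename (r : nat -> nat) (C : clause F P) B' :
  (forall x y, r x = r y -> x = y) ->
  selected (subst_clause (fun y => Var (r y)) C) B' -> exists B, selected C B.
Proof.
  intros Hr. set (rho := fun y => Var (r y) : term F).
  destruct C as [G D]. unfold selected, subst_clause; simpl. intros [HB' Hs].
  apply in_map_iff in HB' as [B [<- HB]]. exists B. split; auto.
  assert (DV : flat_map atom_vars (map (subst_atom rho) D) = map r (flat_map atom_vars D)).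
  { clear -D. induction D; simpl; auto.
    rewrite map_app, IHD. unfold rho. rewrite atom_vars_rename. auto. }
  unfold sel_cond in *. rewrite DV in Hs.
  destruct Hs as [S [t' [E Hc]]]. destruct B as [S0 t|]; simpl in E; try discriminate.
  injection E as E1 E2. subst S t'. exists S0, t. split; auto.
  destruct Hc as [Hc|[[Hc1 [x [Hx1 Hx2]]]|[Hc1 [A' [HA' Ht']]]]].
  - left. intros [x ->]. apply Hc. exists (r x). reflexivity.
  - right; left. split.
    + intros A HA. destruct (Hc1 (subst_atom rho A)) as [p [x' E]]; [apply in_map; auto|].
      destruct A as [p0 a|]; simpl in E; try discriminate. injection E as -> E.
      destruct a; simpl in E; try discriminate. exists p, n; auto.
    + destruct t; simpl in Hx1; try discriminate. injection Hx1 as <-. exists n; split; auto.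
      intros Hn. apply Hx2. apply in_map; auto.
  - right; right. split.
    + intros A HA. destruct (Hc1 (subst_atom rho A)) as [p [y' [E Hy]]]; [apply in_map; auto|].
      destruct A as [p0 a|]; simpl in E; try discriminate. injection E as -> E.
      destruct a; simpl in E; try discriminate. injection E as <-. exists p, n. split; auto.
      apply in_map_iff in Hy as [z [Hz Hz']]. apply Hr in Hz. subst; auto.
    + apply in_map_iff in HA' as [A [<- HA]]. exists A. split; auto.
      subst rho. destruct A; simpl in Ht'.
      * destruct Ht' as [Ht'|[]]. left. eapply subst_rename_inj; eauto.
      * destruct Ht' as [Ht'|[Ht'|[]]]; [left|right; left]; eapply subst_rename_inj; eauto.
Qed.

Lemma rename_id (C : cclause F P) : rename (fun x => x) C = C.
Proof.
  destruct C as [[G D] pi]. unfold rename, subst_clause, subst_sdc; simpl.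
  assert (HA : forall A : atom F P, subst_atom (fun x => Var x) A = A).
  { destruct A; simpl; rewrite ?subst_id; auto. }
  f_equal; [f_equal|].
  - rewrite <- (map_id G) at 2. apply map_ext; auto.
  - rewrite <- (map_id D) at 2. apply map_ext; auto.
  - rewrite <- (map_id pi) at 2. apply map_ext. intros [a b]; simpl. rewrite subst_id; auto.
Qed.

Lemma is_variant_refl (C : cclause F P) : is_variant C C.
Proof. exists (fun x => x). split; auto. symmetry; apply rename_id. Qed.

Lemma sel_empty_rename (r : nat -> nat) (C : clause F P) :
  (forall x y, r x = r y -> x = y) ->
  sel_empty C -> sel_empty (subst_clause (fun y => Var (r y)) C).
Proof. intros Hr HC B HB. apply selected_rename in HB as [B0 HB0]; auto. eapply HC; eauto. Qed.

End Clauses.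

Section Ordering.
Variables F P : Type.
Variable ar : F -> nat.
Variable lt : atom F P -> atom F P -> Prop.
Hypothesis lt_trans : forall A B C, lt A B -> lt B C -> lt A C.
Hypothesis lt_total :
  forall A B, ground_atom ar A -> ground_atom ar B -> A <> B -> lt A B \/ lt B A.

Lemma exists_max_lit (l : list (lit F P)) :
  l <> [] -> (forall L, In L l -> ground_atom ar (lit_atom L)) ->
  exists L, In L l /\ forall L', In L' l -> lit_le lt L' L.
Proof.
  induction l as [|a l IH]; intros Hne HG; [congruence|].
  destruct l as [|b l].
  - exists a. split; simpl; auto. intros L' [<-|[]]; left; auto.
  - destruct IH as [M [HM HMax]]; [congruence| intros; apply HG; simpl; auto|].
    destruct (@lit_lt_total F P lt a M) as [<-|[H|H]].
    + intros Hn. apply lt_total; auto; apply HG; simpl; auto.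
    + exists a. split; simpl; auto. intros L' [<-|HL']; [left; auto| auto].
    + exists M. split; [simpl; auto|]. intros L' [<-|HL']; [right; auto| auto].
    + exists a. split; simpl; auto. intros L' [<-|HL']; [left; auto|].
      right. eapply lit_le_lt_trans; eauto.
Qed.

Lemma clause_lt_dominated (C D : clause F P) L :
  In L (lits C) -> (forall L', In L' (lits D) -> lit_lt lt L' L) -> clause_lt lt D C.
Proof.
  intros HL H. exists [], (lits C), (lits D). simpl. split; [auto|split; [auto|split]].
  - destruct (lits C); [destruct HL| congruence].
  - intros y Hy. exists L; auto.
Qed.

Lemma clause_lt_replace (R C : clause F P) L Z Y :
  Permutation (lits C) (L :: Z) -> Permutation (lits R) (Y ++ Z) ->
  (forall y, In y Y -> lit_lt lt y L) -> clause_lt lt R C.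
Proof.
  intros H1 H2 H3. exists Z, [L], Y. split; [|split; [|split]].
  - eapply perm_trans; [exact H1|]. apply Permutation_cons_append.
  - eapply perm_trans; [exact H2|]. apply Permutation_app_comm.
  - congruence.
  - intros y Hy. exists L; simpl; auto.
Qed.

Lemma clause_lt_perm (C C' D D' : clause F P) :
  clause_perm C C' -> clause_perm D D' -> clause_lt lt C D -> clause_lt lt C' D'.
Proof. intros H1 H2. apply mul_lt_perm; apply lits_perm; auto. Qed.

Lemma wf_clause_lt : well_founded lt -> well_founded (clause_lt lt).
Proof.
  intros W. unfold clause_lt. apply wf_inverse_image with (f := @lits F P).
  apply wf_mul_lt, wf_lit_lt; auto.
Qed.

Lemma ground_atom_subst (dl : nat -> term F) (A : atom F P) :
  grounding ar dl -> wf_atom ar A -> ground_atom ar (subst_atom dl A).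
Proof.
  intros G W. unfold ground_atom, wf_atom in *.
  assert (E : atom_args (subst_atom dl A) = map (subst dl) (atom_args A)) by (destruct A; auto).
  rewrite E. rewrite Forall_map. eapply Forall_impl; [|exact W]. intros t Ht.
  destruct (ground_subst t G); auto.
Qed.

Lemma clause_lt_remove_pos (G Da Db : list (atom F P)) A :
  clause_lt lt (G, Da ++ Db) (G, Da ++ A :: Db).
Proof.
  apply clause_lt_replace with (L := Pos A) (Z := lits (G, Da ++ Db)) (Y := []).
  - apply lits_pos_middle.
  - apply Permutation_refl.
  - intros y [].
Qed.

Lemma clause_lt_resolvent (C : clause F P) (Ga Gb D : list (atom F P)) B :
  (forall L, In L (lits C) -> lit_lt lt L (Pos B)) ->
  clause_lt lt (clause_app C (Ga ++ Gb, D)) (Ga ++ B :: Gb, D).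
Proof.
  intros H. apply clause_lt_replace with (L := Neg B) (Z := lits (Ga ++ Gb, D)) (Y := lits C).
  - apply lits_neg_middle.
  - apply lits_clause_app.
  - intros y Hy. apply lit_lt_trans with (Pos B); [auto | apply H; auto | apply lit_lt_pos_neg].
Qed.

Lemma maximal_literal_cases (G Dl : list (atom F P)) d :
  grounding ar d -> Forall (wf_atom ar) G -> Forall (wf_atom ar) Dl -> (G, Dl) <> ([], []) ->
  (exists Ga B Gb, G = Ga ++ B :: Gb /\
     forall L, In L (lits (Ga ++ Gb, Dl)) -> lit_le lt (subst_lit d L) (Neg (subst_atom d B))) \/
  (exists Da A Db, Dl = Da ++ A :: Db /\
     forall L, In L (lits (G, Da ++ Db)) -> lit_lt lt (subst_lit d L) (Pos (subst_atom d A))) \/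
  (exists Da X Db Y Dc, Dl = Da ++ X :: Db ++ Y :: Dc /\ subst_atom d X = subst_atom d Y /\
     forall L, In L (lits (G, Da ++ Db ++ Y :: Dc)) ->
       lit_le lt (subst_lit d L) (Pos (subst_atom d X))).
Proof.
  intros Gd WG WD Hne.
  destruct (@exists_max_lit (lits (subst_clause d (G, Dl)))) as [M [HM Hmax]].
  { rewrite lits_subst. destruct G, Dl; simpl; congruence. }
  { intros L HL. rewrite lits_subst in HL. apply in_map_iff in HL as [L0 [<- HL0]].
    rewrite lit_atom_subst. apply ground_atom_subst; auto. rewrite Forall_forall in WG, WD.
    apply In_lits in HL0 as [[A [-> HA]]|[A [-> HA]]]; auto. }
  assert (HmaxL : forall L0, In L0 (lits (G, Dl)) -> lit_le lt (subst_lit d L0) M)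
    by (intros L0 HL0; apply Hmax; rewrite lits_subst; apply in_map; auto).
  rewrite lits_subst in HM. apply in_map_iff in HM as [M0 [<- HM0]].
  apply In_lits in HM0 as [[B [-> HB]]|[A [-> HA]]]; cbn [fst snd] in *.
  { left. apply in_split in HB as [Ga [Gb ->]]. exists Ga, B, Gb. split; auto.
    intros L HL. apply HmaxL. eapply lits_incl; [| |exact HL]; solve_incl. }
  right. apply in_split in HA as [Da [Db ->]].
  destruct (classic (forall L, In L (lits (G, Da ++ Db)) ->
                       lit_lt lt (subst_lit d L) (Pos (subst_atom d A)))) as [Hall|Hnall].
  { left. eauto. }
  right. apply not_all_ex_not in Hnall as [L0 HL0]. apply imply_to_and in HL0 as [HL0 Hnlt].
  assert (Hle : lit_le lt (subst_lit d L0) (Pos (subst_atom d A)))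
    by (apply HmaxL; eapply lits_incl; [| |exact HL0]; solve_incl).
  destruct Hle as [Heq|Hlt]; [|contradiction].
  apply In_lits in HL0 as [[B [-> HB]]|[B [-> HB]]]; simpl in Heq; [discriminate|].
  injection Heq as HdB. simpl in HB. apply in_app_iff in HB as [HB|HB].
  - apply in_split in HB as [Da1 [Da2 ->]]. exists Da1, B, Da2, A, Db.
    split; [rewrite <- app_assoc; reflexivity | split; auto].
    intros L HL. rewrite HdB. apply HmaxL. eapply lits_incl; [| |exact HL]; solve_incl.
  - apply in_split in HB as [Db1 [Db2 ->]]. exists Da, A, Db1, B, Db2.
    split; [reflexivity | split; auto].
    intros L HL. apply HmaxL. eapply lits_incl; [| |exact HL]; solve_incl.
Qed.

End Ordering.

Section Lifting.
Variables F P : Type.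
Variable ar : F -> nat.
Variable lt : atom F P -> atom F P -> Prop.

Definition wf_sdc (pi : sdc F) : Prop :=
  forall c, In c pi -> wf ar (fst c) /\ wf ar (snd c) /\ straight (snd c).

Lemma is_SDC_wf_sdc pi : is_SDC ar pi -> wf_sdc pi.
Proof.
  unfold is_SDC. rewrite Forall_forall. intros H c Hc.
  destruct (H c Hc) as [S [W1 [W2 _]]]; auto.
Qed.

Lemma wf_sdc_rename (r : nat -> nat) pi : wf_sdc pi -> wf_sdc (subst_sdc (fun x => Var (r x)) pi).
Proof.
  intros H c Hc. unfold subst_sdc in Hc. apply in_map_iff in Hc as [c0 [<- Hc0]]. simpl.
  destruct (H c0 Hc0) as [W1 [W2 S]]. split; auto. apply wf_subst; simpl; auto.
Qed.

Lemma wf_sdc_app pi1 pi2 : wf_sdc pi1 -> wf_sdc pi2 -> wf_sdc (pi1 ++ pi2).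
Proof. intros H1 H2 c Hc. apply in_app_iff in Hc as [Hc|Hc]; auto. Qed.

Lemma solution_iff th pi : solution ar th pi <-> grounding ar th /\ solves th pi.
Proof. unfold solution, solves. rewrite Forall_forall. tauto. Qed.

Lemma solution_app th pi1 pi2 :
  solution ar th (pi1 ++ pi2) <-> solution ar th pi1 /\ solution ar th pi2.
Proof. unfold solution. rewrite Forall_app. tauto. Qed.

Lemma solution_subst_sdc th sg pi : (forall x, th x = subst th (sg x)) ->
  solution ar th pi -> solution ar th (subst_sdc sg pi).
Proof.
  intros Hsg. rewrite !solution_iff. intros [G S]. split; auto. intros c Hc.
  unfold subst_sdc in Hc. apply in_map_iff in Hc as [c0 [<- Hc0]]. simpl.
  rewrite subst_comp, (subst_ext_all _ th); [apply S; auto | intros; symmetry; auto].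
Qed.

Lemma norm_subst_sdc_solution th sg pi :
  wf_sdc pi -> solution ar th pi -> (forall x, th x = subst th (sg x)) ->
  exists pi', is_norm (Some (subst_sdc sg pi)) (Some pi') /\ solution ar th pi'.
Proof.
  intros W Hs Hsg. pose proof (@solution_subst_sdc th sg pi Hsg Hs) as Hs'.
  apply solution_iff in Hs' as [G S].
  destruct (is_norm_exists (Some (subst_sdc sg pi))) as [o [Hrt Hirr]].
  destruct (norm_solution (ar := ar) (dl := th) Hrt) as [pi' [-> [_ S']]]; auto.
  - intros c Hc. unfold subst_sdc in Hc. apply in_map_iff in Hc as [c0 [<- Hc0]]. simpl.
    destruct (W c0 Hc0) as [W1 [W2 St]]. split; auto.
    rewrite subst_comp, (subst_ext_all _ th) by (intros; symmetry; auto).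
    apply wf_subst; auto. intros; apply G.
  - exists pi'. split; [split|apply solution_iff]; auto.
Qed.

Lemma rename_apart (C1 C2 : cclause F P) d1 d2 : grounding ar d1 -> grounding ar d2 ->
  exists r th, (forall x y, r x = r y -> x = y) /\ var_disjoint (rename r C1) C2 /\
    grounding ar th /\ (forall x, th (r x) = d1 x) /\
    (forall x, In x (cclause_vars C2) -> th x = d2 x).
Proof.
  intros G1 G2. set (m := list_max (cclause_vars C2)).
  assert (Hm : forall x, In x (cclause_vars C2) -> x <= m).
  { pose proof (proj1 (list_max_le (cclause_vars C2) m) (le_n _)) as H.
    rewrite Forall_forall in H. exact H. }
  exists (fun x => x + S m), (fun y => if m <? y then d1 (y - S m) else d2 y).
  split; [intros x y; lia|]. split; [|split; [|split]].
  - intros x H1 H2. apply cclause_vars_rename_image in H1 as [y ->]. apply Hm in H2. lia.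
  - intros x. destruct (m <? x); auto.
  - intros x. destruct (m <? x + S m) eqn:E; [f_equal; lia|]. apply Nat.ltb_ge in E. lia.
  - intros x Hx. apply Hm in Hx. destruct (m <? x) eqn:E; auto. apply Nat.ltb_lt in E. lia.
Qed.

Lemma strictly_max_lift th sg pi L Ls :
  (forall x, th x = subst th (sg x)) -> solution ar th (subst_sdc sg pi) ->
  (forall L', In L' Ls -> lit_lt lt (subst_lit th L') (subst_lit th L)) ->
  strictly_max ar lt (subst_lit sg L) (map (subst_lit sg) Ls) (subst_sdc sg pi).
Proof.
  intros Hsg Hs H. exists th. split; auto. intros B HB.
  apply in_map_iff in HB as [L' [<- HL']]. rewrite !subst_lit_absorb; auto.
Qed.

Lemma maximal_lift th sg pi L Ls :
  (forall x, th x = subst th (sg x)) -> solution ar th (subst_sdc sg pi) ->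
  (forall L', In L' Ls -> lit_le lt (subst_lit th L') (subst_lit th L)) ->
  maximal ar lt (subst_lit sg L) (map (subst_lit sg) Ls) (subst_sdc sg pi).
Proof.
  intros Hsg Hs H. exists th. split; auto. intros B HB.
  apply in_map_iff in HB as [L' [<- HL']]. rewrite !subst_lit_absorb; auto.
Qed.

Lemma factoring_lifting G Da X Db Y Dc pi d :
  wf_sdc pi -> solution ar d pi -> subst_atom d X = subst_atom d Y ->
  sel_empty (G, Da ++ X :: Db ++ Y :: Dc) ->
  (forall L, In L (lits (G, Da ++ Db ++ Y :: Dc)) ->
     lit_le lt (subst_lit d L) (Pos (subst_atom d X))) ->
  exists R, sdc_factoring ar lt ((G, Da ++ X :: Db ++ Y :: Dc), pi) R /\
    ground_instance ar R (subst_clause d (G, Da ++ X :: Db ++ Dc)).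
Proof.
  intros W Hs Hxy Hsel Hmax.
  destruct (atom_unifier_mgu _ _ _ Hxy) as [sg [Hmgu Hsg]].
  destruct (@norm_subst_sdc_solution d sg pi W Hs Hsg) as [pi' [Hnorm Hsol']].
  exists (subst_clause sg (G, Da ++ X :: Db ++ Dc), pi'). split.
  - exists G, Da, X, Db, Y, Dc, pi, sg, pi'.
    split; [reflexivity | split; [exact Hmgu | split; [exact Hsel | split]]].
    + apply (@maximal_lift d sg pi (Pos X)); auto using solution_subst_sdc.
    + split; [exact Hnorm | split; [exists d; exact Hsol' | reflexivity]].
  - exists d. split; auto. simpl. symmetry; apply subst_clause_absorb; auto.
Qed.

Lemma resolution_lifting_disjoint G1 D1a A1 D1b pi1 G2a B G2b D2 pi2 th :
  var_disjoint ((G1, D1a ++ A1 :: D1b), pi1) ((G2a ++ B :: G2b, D2), pi2) ->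
  wf_sdc (pi1 ++ pi2) -> solution ar th (pi1 ++ pi2) ->
  subst_atom th A1 = subst_atom th B ->
  sel_empty (G1, D1a ++ A1 :: D1b) ->
  (forall L, In L (lits (G1, D1a ++ D1b)) ->
     lit_lt lt (subst_lit th L) (Pos (subst_atom th A1))) ->
  selected (G2a ++ B :: G2b, D2) B \/
  (sel_empty (G2a ++ B :: G2b, D2) /\
   forall L, In L (lits (G2a ++ G2b, D2)) ->
     lit_le lt (subst_lit th L) (Neg (subst_atom th B))) ->
  exists R, sdc_resolution ar lt ((G1, D1a ++ A1 :: D1b), pi1) ((G2a ++ B :: G2b, D2), pi2) R /\
    ground_instance ar R
      (clause_app (subst_clause th (G1, D1a ++ D1b)) (subst_clause th (G2a ++ G2b, D2))).
Proof.
  intros Hdisj W Hs HAB Hsel1 Hlt1 Hcond2.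
  destruct (atom_unifier_mgu _ _ _ HAB) as [sg [Hmgu Hsg]].
  destruct (@norm_subst_sdc_solution th sg _ W Hs Hsg) as [pi' [Hnorm Hsol']].
  pose proof (@solution_subst_sdc th sg _ Hsg Hs) as Hs'.
  unfold subst_sdc in Hs'. rewrite map_app in Hs'. apply solution_app in Hs' as [Hs1 Hs2].
  exists (subst_clause sg (G1 ++ G2a ++ G2b, D1a ++ D1b ++ D2), pi'). split.
  - exists G1, D1a, A1, D1b, pi1, G2a, B, G2b, D2, pi2, sg, pi'.
    do 2 (split; [reflexivity|]). do 3 (split; [assumption|]).
    split; [exists th; exact Hsol'|].
    split; [apply (@strictly_max_lift th sg pi1 (Pos A1)); auto|].
    split; [exact Hsel1|]. split; [|reflexivity].
    destruct Hcond2 as [H|[H1 H2]]; [left; auto | right; split; auto].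
    apply (@maximal_lift th sg pi2 (Neg B)); auto.
  - exists th. split; auto. simpl. rewrite subst_clause_absorb by auto.
    unfold subst_clause, clause_app; simpl. rewrite !map_app, <- !app_assoc. reflexivity.
Qed.

Lemma solution_rename_apart th (r : nat -> nat) d1 d2 pi1 pi2 :
  grounding ar th -> (forall x, th (r x) = d1 x) ->
  (forall x, In x (sdc_lhs_vars pi2) -> th x = d2 x) ->
  solution ar d1 pi1 -> solution ar d2 pi2 ->
  solution ar th (subst_sdc (fun x => Var (r x)) pi1 ++ pi2).
Proof.
  intros Gth Hth1 Hth2 Hs1 Hs2. apply solution_iff in Hs1 as [_ S1], Hs2 as [_ S2].
  apply solution_app. split; apply solution_iff; split; auto; intros c Hc.
  - unfold subst_sdc in Hc. apply in_map_iff in Hc as [c0 [<- Hc0]]. simpl.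
    rewrite subst_rename with (d := d1) by auto. apply S1; auto.
  - rewrite (subst_ext th d2); [apply S2; auto|].
    intros x Hx. apply Hth2. apply in_flat_map. eauto.
Qed.

Lemma resolution_lifting G1 D1a A1 D1b pi1 G2a B G2b D2 pi2 d1 d2 :
  wf_sdc pi1 -> wf_sdc pi2 -> solution ar d1 pi1 -> solution ar d2 pi2 ->
  subst_atom d1 A1 = subst_atom d2 B ->
  sel_empty (G1, D1a ++ A1 :: D1b) ->
  (forall L, In L (lits (G1, D1a ++ D1b)) ->
     lit_lt lt (subst_lit d1 L) (Pos (subst_atom d1 A1))) ->
  selected (G2a ++ B :: G2b, D2) B \/
  (sel_empty (G2a ++ B :: G2b, D2) /\
   forall L, In L (lits (G2a ++ G2b, D2)) ->
     lit_le lt (subst_lit d2 L) (Neg (subst_atom d2 B))) ->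
  exists C1' R, is_variant ((G1, D1a ++ A1 :: D1b), pi1) C1' /\
    sdc_resolution ar lt C1' ((G2a ++ B :: G2b, D2), pi2) R /\
    ground_instance ar R
      (clause_app (subst_clause d1 (G1, D1a ++ D1b)) (subst_clause d2 (G2a ++ G2b, D2))).
Proof.
  intros W1 W2 Hs1 Hs2 HAB Hsel1 Hlt1 Hcond2.
  set (C1 := ((G1, D1a ++ A1 :: D1b), pi1)). set (C2 := ((G2a ++ B :: G2b, D2), pi2)).
  destruct (rename_apart C1 C2 (proj1 Hs1) (proj1 Hs2))
    as [r [th [Hr [Hdisj [Gth [Hth1 Hth2]]]]]].
  set (rho := fun x => Var (r x) : term F).
  assert (Hagree : forall x, In x (clause_vars (fst C2)) -> th x = d2 x)
    by (intros x Hx; apply Hth2; unfold cclause_vars; apply in_app_iff; auto).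
  destruct (@subst_agree_sub_clause F P th d2 _ _ [B] [] Hagree) as [EB _]; [solve_incl..|].
  injection EB as HB.
  destruct (@subst_agree_sub_clause F P th d2 _ _ (G2a ++ G2b) D2 Hagree) as [Hcl2 Hlit2];
    [solve_incl..|].
  assert (EC1 : rename r C1 = (subst_clause rho (G1, D1a ++ A1 :: D1b), subst_sdc rho pi1))
    by reflexivity.
  rewrite subst_clause_middle in EC1. rewrite EC1 in Hdisj.
  destruct (@resolution_lifting_disjoint _ _ _ _ _ _ _ _ _ _ th Hdisj) as [R [Hres Hgi]].
  - apply wf_sdc_app; auto. apply wf_sdc_rename; auto.
  - apply solution_rename_apart with d1 d2; auto.
    intros x Hx. apply Hth2. unfold cclause_vars. apply in_app_iff. auto.
  - rewrite HB, <- HAB. apply subst_rename_atom; auto.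
  - rewrite <- subst_clause_middle. apply sel_empty_rename; auto.
  - intros L' HL'. rewrite <- map_app in HL'.
    change (In L' (lits (subst_clause rho (G1, D1a ++ D1b)))) in HL'.
    rewrite lits_subst in HL'. apply in_map_iff in HL' as [L0 [<- HL0]]. unfold rho.
    rewrite subst_rename_lit with (d := d1), subst_rename_atom with (d := d1); auto.
  - destruct Hcond2 as [Hsel2|[Hsel2 Hmax2]]; [left; auto | right; split; auto].
    intros L' HL'. simpl. rewrite HB, Hlit2; auto.
  - exists (rename r C1), R. split; [exists r; auto|]. rewrite EC1. split; auto.
    rewrite <- map_app in Hgi.
    change (map (subst_atom rho) G1, map (subst_atom rho) (D1a ++ D1b))
      with (subst_clause rho (G1, D1a ++ D1b)) in Hgi.
    unfold rho in Hgi. rewrite subst_rename_clause with (d := d1), Hcl2 in Hgi; auto.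
Qed.

End Lifting.

Section CandidateModel.
Variables F P : Type.
Variable ar : F -> nat.
Variable lt : atom F P -> atom F P -> Prop.
Variable N : cclause F P -> Prop.
Hypothesis lt_trans : forall A B C, lt A B -> lt B C -> lt A C.
Hypothesis lt_total :
  forall A B, ground_atom ar A -> ground_atom ar B -> A <> B -> lt A B \/ lt B A.
Hypothesis N_msl : forall Cp, N Cp -> msl_clause ar Cp.
Hypothesis N_saturated : saturated ar lt N.
Variable Iof : clause F P -> atom F P -> Prop.
Hypothesis Iof_spec : is_partial_model_fun ar lt N Iof.

Notation IN := (I_N ar lt N Iof).
Notation inst Cp dl := (subst_clause dl (fst Cp)).

Lemma msl_wf G D pi : N ((G, D), pi) ->
  Forall (wf_atom ar) G /\ Forall (wf_atom ar) D /\ wf_sdc ar pi.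
Proof. intros H. apply N_msl in H. simpl in H. split; [|split; [|apply is_SDC_wf_sdc]]; tauto. Qed.

Lemma Iof_sub_IN C0 d0 A : ginst ar N C0 d0 -> Iof (inst C0 d0) A -> IN A.
Proof.
  intros H HA. apply (Iof_spec H) in HA as [Cp [dl [H1 [_ H2]]]]. exists Cp, dl; auto.
Qed.

Lemma produced_below_in_Iof C0 d0 Cp dl A : ginst ar N C0 d0 -> ginst ar N Cp dl ->
  clause_lt lt (inst Cp dl) (inst C0 d0) -> produces ar lt Iof Cp dl A -> Iof (inst C0 d0) A.
Proof. intros H0 H1 H2 H3. apply (Iof_spec H0). exists Cp, dl; auto. Qed.

Lemma produces_clause_lt Cp dl A L D : produces ar lt Iof Cp dl A -> In L (lits D) ->
  lit_lt lt (Pos A) L -> clause_lt lt (inst Cp dl) D.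
Proof.
  intros [[G [Da [Db [E H]]]] _] HL Hlt. apply clause_lt_dominated with L; auto.
  intros L' HL'. rewrite E in HL'.
  apply Permutation_in with (l' := Pos A :: lits (G, Da ++ Db)) in HL'; [|apply lits_pos_middle].
  destruct HL' as [<-|HL']; [auto | eapply lit_lt_trans; eauto].
Qed.

(* A produced atom is smaller than the negative literal it would falsify, so the
   producing instance lies below every clause containing that negative literal. *)
Lemma IN_neg_in_Iof C0 d0 B :
  ginst ar N C0 d0 -> In B (fst (inst C0 d0)) -> IN B -> Iof (inst C0 d0) B.
Proof.
  intros H0 HB [Cp [dl [H1 H2]]]. eapply produced_below_in_Iof; eauto.
  eapply produces_clause_lt; eauto.
  - apply In_lits. left. eauto.
  - apply lit_lt_pos_neg.
Qed.

Lemma produces_spec Cp dl A : ginst ar N Cp dl -> produces ar lt Iof Cp dl A ->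
  exists G Da Db, inst Cp dl = (G, Da ++ A :: Db) /\
    (forall L, In L (lits (G, Da ++ Db)) -> lit_lt lt L (Pos A)) /\
    ~ gsat IN (G, Da ++ Db).
Proof.
  intros Hg Hp. pose proof Hp as [[G [Da [Db [E H]]]] [Hsel Hng]].
  exists G, Da, Db. split; auto. split; auto.
  rewrite E in Hng. apply not_gsat_iff in Hng as [HD HG]. simpl in HD, HG.
  apply not_gsat_iff. simpl. split.
  - intros B HB [Cp2 [dl2 [Hg2 Hp2]]]. apply (HD B).
    { apply in_app_iff in HB as [HB|HB]; apply in_app_iff; simpl; auto. }
    rewrite <- E. eapply produced_below_in_Iof; eauto. rewrite E.
    eapply produces_clause_lt; eauto.
    + apply In_lits. right. exists A. split; auto. simpl. apply in_app_iff; simpl; auto.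
    + apply H. apply In_lits. right. exists B; auto.
  - intros B HB. eapply Iof_sub_IN; eauto. rewrite E. auto.
Qed.

Definition conclusions_true_below (D : clause F P) : Prop :=
  forall R RD, (redundant ar lt N R \/ ground_included ar N R) -> ground_instance ar R RD ->
    clause_lt lt RD D -> gsat IN RD.

Lemma counterexample_not_resolvable G2a B G2b D2 pi2 d2 :
  N ((G2a ++ B :: G2b, D2), pi2) -> solution ar d2 pi2 ->
  ~ gsat IN (subst_clause d2 (G2a ++ B :: G2b, D2)) ->
  conclusions_true_below (subst_clause d2 (G2a ++ B :: G2b, D2)) ->
  selected (G2a ++ B :: G2b, D2) B \/
  (sel_empty (G2a ++ B :: G2b, D2) /\
   forall L, In L (lits (G2a ++ G2b, D2)) ->
     lit_le lt (subst_lit d2 L) (Neg (subst_atom d2 B))) ->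
  False.
Proof.
  intros HN2 Hs2 Hf Hc Hcond.
  assert (HBg : IN (subst_atom d2 B)).
  { apply not_gsat_iff in Hf as [_ HfG]. apply HfG. simpl. apply in_map, in_app_iff; simpl; auto. }
  destruct HBg as [[[G1 Dl1] pi1] [d1 [[HN1 Hs1] Hprod]]].
  destruct (produces_spec (conj HN1 Hs1) Hprod) as [G [Da [Db [Einst [Hlt Hfalse1]]]]].
  unfold subst_clause in Einst; simpl in Einst. injection Einst as EG ED.
  apply map_eq_app in ED as [D1a [Dr [-> [EDa EDr]]]].
  apply map_eq_cons in EDr as [A1 [D1b [-> [EA EDb]]]].
  assert (EC1 : (G, Da ++ Db) = subst_clause d1 (G1, D1a ++ D1b))
    by (unfold subst_clause; simpl; rewrite map_app; congruence).
  destruct (msl_wf HN1) as [_ [_ W1]]. destruct (msl_wf HN2) as [_ [_ W2]].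
  destruct (@resolution_lifting F P ar lt G1 D1a A1 D1b pi1 G2a B G2b D2 pi2 d1 d2)
    as [C1' [R [Hv [Hres Hgi]]]]; auto.
  { destruct Hprod as [_ [Hsel _]]. exact Hsel. }
  { intros L HL. rewrite EA. apply Hlt. rewrite EC1, lits_subst. apply in_map; auto. }
  assert (Hbelow : clause_lt lt (clause_app (subst_clause d1 (G1, D1a ++ D1b))
                                            (subst_clause d2 (G2a ++ G2b, D2)))
                              (subst_clause d2 (G2a ++ B :: G2b, D2))).
  { rewrite <- EC1. unfold subst_clause; simpl. rewrite !map_app.
    apply clause_lt_resolvent; auto. }
  destruct N_saturated as [Hsr _].
  pose proof (Hc R _ (Hsr _ _ _ _ R HN1 HN2 Hv (is_variant_refl _) Hres) Hgi Hbelow) as Htrue.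
  rewrite <- EC1 in Htrue. apply gsat_clause_app in Htrue as [H1|H2]; [contradiction|].
  apply Hf. eapply gsat_incl; [| |exact H2]; simpl; rewrite ?map_app; solve_incl.
Qed.

Lemma counterexample_not_factorable G Da X Db Y Dc pi d :
  N ((G, Da ++ X :: Db ++ Y :: Dc), pi) -> solution ar d pi ->
  subst_atom d X = subst_atom d Y ->
  ~ gsat IN (subst_clause d (G, Da ++ X :: Db ++ Y :: Dc)) ->
  conclusions_true_below (subst_clause d (G, Da ++ X :: Db ++ Y :: Dc)) ->
  sel_empty (G, Da ++ X :: Db ++ Y :: Dc) ->
  (forall L, In L (lits (G, Da ++ Db ++ Y :: Dc)) ->
     lit_le lt (subst_lit d L) (Pos (subst_atom d X))) ->
  False.
Proof.
  intros HN Hs Hxy Hf Hc Hse Hmax.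
  destruct (msl_wf HN) as [_ [_ W]].
  destruct (@factoring_lifting F P ar lt G Da X Db Y Dc pi d) as [R [Hfac Hgi]]; auto.
  assert (Hbelow : clause_lt lt (subst_clause d (G, Da ++ X :: Db ++ Dc))
                              (subst_clause d (G, Da ++ X :: Db ++ Y :: Dc))).
  { replace (Da ++ X :: Db ++ Y :: Dc) with ((Da ++ X :: Db) ++ Y :: Dc)
      by (rewrite <- app_assoc; reflexivity).
    replace (Da ++ X :: Db ++ Dc) with ((Da ++ X :: Db) ++ Dc)
      by (rewrite <- app_assoc; reflexivity).
    rewrite subst_clause_middle. unfold subst_clause at 1; simpl. rewrite map_app.
    apply clause_lt_remove_pos. }
  destruct N_saturated as [_ Hsf].
  pose proof (Hc R _ (Hsf _ R HN Hfac) Hgi Hbelow) as Htrue.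
  apply Hf. eapply gsat_incl; [| |exact Htrue]; simpl; rewrite ?map_app; solve_incl.
Qed.

Lemma counterexample_not_productive G Da A Db pi d :
  N ((G, Da ++ A :: Db), pi) -> solution ar d pi ->
  ~ gsat IN (subst_clause d (G, Da ++ A :: Db)) ->
  sel_empty (G, Da ++ A :: Db) ->
  (forall L, In L (lits (G, Da ++ Db)) -> lit_lt lt (subst_lit d L) (Pos (subst_atom d A))) ->
  False.
Proof.
  intros HN Hs Hf Hse Hlt.
  set (C := ((G, Da ++ A :: Db), pi)).
  assert (Hg : ginst ar N C d) by (split; auto).
  apply not_gsat_iff in Hf as [HfD HfG].
  assert (Hp : produces ar lt Iof C d (subst_atom d A)).
  { split; [|split; [auto|]].
    - exists (map (subst_atom d) G), (map (subst_atom d) Da), (map (subst_atom d) Db).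
      split; [apply subst_clause_middle|].
      intros L HL. replace (map (subst_atom d) G, map (subst_atom d) Da ++ map (subst_atom d) Db)
        with (subst_clause d (G, Da ++ Db)) in HL
        by (unfold subst_clause; simpl; rewrite map_app; auto).
      rewrite lits_subst in HL. apply in_map_iff in HL as [L0 [<- HL0]]. auto.
    - apply not_gsat_iff. split.
      + intros B HB HI. apply (HfD B); auto. eapply Iof_sub_IN; eauto.
      + intros B HB. apply IN_neg_in_Iof; auto. }
  apply (HfD (subst_atom d A)).
  - rewrite subst_clause_middle. simpl. apply in_app_iff; simpl; auto.
  - exists C, d. split; auto.
Qed.

Lemma I_N_models_ground : well_founded lt -> ~ in_groundN ar N empty_clause ->
  forall D, in_groundN ar N D -> gsat IN D.
Proof.
  intros Hwf Hne D.
  induction D as [D IH] using (well_founded_induction (wf_clos_trans _ _ (wf_clause_lt Hwf))).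
  intros [[[G Dl] pi] [D' [HN [[d [Hs ->]] Hperm]]]].
  apply gsat_perm with (subst_clause d (G, Dl)); auto.
  apply NNPP; intros Hf.
  assert (Hc : conclusions_true_below (subst_clause d (G, Dl))).
  { intros R RD Hr Hgi Hlt.
    assert (HRD : clos_trans _ (clause_lt lt) RD D).
    { apply t_step. eapply clause_lt_perm; [| exact Hperm | exact Hlt].
      split; apply Permutation_refl. }
    destruct Hr as [Hr|Hr]; [|apply IH; auto].
    destruct (Hr RD Hgi) as [Ds [HDs Hent]]. apply Hent. intros Di HDi.
    destruct (HDs Di HDi) as [Hin Hlt']. apply IH; auto. eapply t_trans; [apply t_step|]; eauto. }
  destruct (msl_wf HN) as [WG [WD _]].
  assert (Gd : grounding ar d) by (destruct Hs; auto).
  destruct (classic (exists B, selected (G, Dl) B)) as [[B HB]|Hnsel].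
  { pose proof HB as [HBin _]. simpl in HBin. apply in_split in HBin as [Ga [Gb ->]].
    eapply counterexample_not_resolvable; eauto. }
  assert (Hse : sel_empty (G, Dl)) by (intros B HB; apply Hnsel; eauto).
  assert (Hnonempty : (G, Dl) <> ([], [])).
  { intros E. injection E as -> ->. apply Hne. exists (([], []), pi), empty_clause.
    split; auto. split; [exists d; auto | split; apply Permutation_refl]. }
  destruct (@maximal_literal_cases F P ar lt lt_trans lt_total G Dl d Gd WG WD Hnonempty)
    as [[Ga [B [Gb [-> Hmax]]]] | [[Da [A [Db [-> Hlt]]]] |
        [Da [X [Db [Y [Dc [-> [Hxy Hmax]]]]]]]]].
  - eapply counterexample_not_resolvable; eauto.
  - eapply counterexample_not_productive; eauto.
  - eapply counterexample_not_factorable; eauto.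
Qed.

End CandidateModel.

Section CandidateInterpretation.
Variables F P : Type.
Variable ar : F -> nat.
Variable lt : atom F P -> atom F P -> Prop.
Variable N : cclause F P -> Prop.
Hypothesis lt_wf : well_founded lt.

Definition candidate_step (D : clause F P)
    (rec : forall D', clause_lt lt D' D -> atom F P -> Prop) : atom F P -> Prop :=
  fun A => exists Cp dl (H : clause_lt lt (subst_clause dl (fst Cp)) D), ginst ar N Cp dl /\
    (exists G Da Db, subst_clause dl (fst Cp) = (G, Da ++ A :: Db) /\
       forall L, In L (lits (G, Da ++ Db)) -> lit_lt lt L (Pos A)) /\
    sel_empty (fst Cp) /\ ~ gsat (rec _ H) (subst_clause dl (fst Cp)).

Definition candidate_interp : clause F P -> atom F P -> Prop :=
  Fix (wf_clause_lt lt_wf) (fun _ => atom F P -> Prop) candidate_step.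

Lemma candidate_interp_eq D :
  candidate_interp D = @candidate_step D (fun D' _ => candidate_interp D').
Proof.
  unfold candidate_interp. apply (Fix_eq _ (fun _ => atom F P -> Prop)).
  intros D0 f g Hfg. unfold candidate_step.
  apply functional_extensionality. intros A. apply propositional_extensionality.
  split; intros [Cp [dl [H [H1 [H2 [H3 H4]]]]]]; exists Cp, dl, H;
    (split; [auto | split; [auto | split; auto]]); [rewrite <- Hfg | rewrite Hfg]; auto.
Qed.

Lemma partial_model_fun_exists : exists Iof, is_partial_model_fun ar lt N Iof.
Proof.
  exists candidate_interp. intros C0 d0 _ A. rewrite candidate_interp_eq. unfold candidate_step.
  split.
  - intros [Cp [dl [H [H1 [H2 [H3 H4]]]]]]. exists Cp, dl. split; auto. split; auto. split; auto.
  - intros [Cp [dl [H1 [H [H2 [H3 H4]]]]]]. exists Cp, dl, H. auto.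
Qed.

End CandidateInterpretation.

Theorem lemma3 (F P : Type) (arity : F -> nat) (lt : atom F P -> atom F P -> Prop)
  (N : cclause F P -> Prop) :
  atom_ordering arity lt ->
  (forall Cp, N Cp -> msl_clause arity Cp) ->
  saturated arity lt N ->
  ((~ satisfiable arity N) <-> in_groundN arity N empty_clause) /\
  (~ in_groundN arity N empty_clause ->
     (exists Iof, is_partial_model_fun arity lt N Iof) /\
     (forall Iof, is_partial_model_fun arity lt N Iof ->
        forall Cp, N Cp -> cmodels arity (I_N arity lt N Iof) Cp)).
Proof.
  intros [_ [Htr [Hwf [Htot _]]]] Hmsl Hsat.
  assert (Hmodel : ~ in_groundN arity N empty_clause ->
     (exists Iof, is_partial_model_fun arity lt N Iof) /\
     (forall Iof, is_partial_model_fun arity lt N Iof ->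
        forall Cp, N Cp -> cmodels arity (I_N arity lt N Iof) Cp)).
  { intros Hne. split; [apply partial_model_fun_exists; auto|].
    intros Iof Hspec Cp HN D HD. eapply I_N_models_ground; eauto.
    exists Cp, D. split; auto. split; auto. split; apply Permutation_refl. }
  split; auto. split.
  - intros Hunsat. apply NNPP. intros Hne. apply Hunsat.
    destruct (Hmodel Hne) as [[Iof Hspec] Hm]. exists (I_N arity lt N Iof). auto.
  - intros [Cp [D' [HN [HD [P1 P2]]]]] [I HI]. specialize (HI Cp HN D' HD).
    apply Permutation_sym, Permutation_nil in P1, P2.
    destruct D' as [g dd]. simpl in P1, P2. subst. destruct HI as [[A [[] _]]|[A [[] _]]].
Qed.
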